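(* Let $\Delta_{-1}=\sum_{i=1}^n\sum_{s\ge1}(u^i-\lambda)f^i\,\theta_i^{s+1}\frac{\partial}{\partial u^{i,s}}$, a differential on $\hat{\mathcal A}[\lambda]$. Every element of $\hat{\mathcal C}[\lambda]$ and every element of $\hat d_i(\hat{\mathcal C}_i)\subset\hat{\mathcal A}$ ($i=1,\dots,n$) is a $\Delta_{-1}$-cocycle, and the inclusion of $\hat{\mathcal C}[\lambda]\oplus\bigoplus_{i=1}^n\hat d_i(\hat{\mathcal C}_i)$ into the cocycles induces an isomorphism $H(\hat{\mathcal A}[\lambda],\Delta_{-1})\cong\hat{\mathcal C}[\lambda]\oplus\bigoplus_{i=1}^n\operatorname{im}\big(\hat d_i:\hat{\mathcal C}_i\to\hat{\mathcal C}_i\big).$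
   Context: Let $n\ge1$, $U\subset\mathbb R^n$ a domain with coordinates $u^1,\dots,u^n$ with $u^i\neq u^j$ on $U$ for $i\ne j$, and $f^1,\dots,f^n$ smooth nowhere-vanishing functions on $U$. Let $\hat{\mathcal A}=C^\infty(U)[[u^{i,s}\ (1\le i\le n,\ s\ge1);\ \theta_i^s\ (1\le i\le n,\ s\ge0)]]$ with $u^{i,s}$ even and $\theta_i^s$ odd formal variables, graded by the standard degree $\deg u^{i,s}=\deg\theta_i^s=s$ (functions on $U$ of degree 0), and let $\hat{\mathcal A}[\lambda]$ be polynomials in an even formal variable $\lambda$ with coefficients in $\hat{\mathcal A}$. Define $\hat{\mathcal C}=C^\infty(U)[[\theta_1^0,\dots,\theta_n^0,\theta_1^1,\dots,\theta_n^1]]\subset\hat{\mathcal A}$ and, for each $i$, $\hat{\mathcal C}_i=\hat{\mathcal C}[[u^{i,s},\theta_i^{s+1}:s\ge1]]\subset\hat{\mathcal A}$ (only the variables with this fixed index $i$ are adjoined). On $\hat{\mathcal C}_i$ let $\hat d_i=\sum_{s\ge1}\theta_i^{s+1}\frac{\partial}{\partial u^{i,s}}$. *)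

From Stdlib Require Import Reals List Arith Bool.
Open Scope bool_scope.
Import ListNotations.
Open Scope R_scope.

(* A point of R^n is a function nat -> R vanishing at coordinates >= n;
   coordinates are 0-based: u^(i+1) of the paper is  p i. *)
Definition point := nat -> R.
Definition inRn (n : nat) (p : point) : Prop := forall k, (n <= k)%nat -> p k = 0.

Definition is_open (n : nat) (V : point -> Prop) : Prop :=
  forall x, V x -> exists r, 0 < r /\
    forall y, inRn n y -> (forall k, (k < n)%nat -> Rabs (y k - x k) < r) -> V y.

Definition is_connected (n : nat) (U : point -> Prop) : Prop :=
  forall V W : point -> Prop, is_open n V -> is_open n W ->
    (forall x, U x -> V x \/ W x) ->
    (forall x, U x -> V x -> W x -> False) ->
    (exists x, U x /\ V x) -> (exists x, U x /\ W x) -> False.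

Definition is_domain (n : nat) (U : point -> Prop) : Prop :=
  (forall p, U p -> inRn n p) /\ is_open n U /\ is_connected n U.

Definition upd (x : point) (k : nat) (t : R) : point :=
  fun j => if Nat.eqb j k then t else x j.

Definition cont_at (n : nat) (g : point -> R) (x : point) : Prop :=
  forall eps, 0 < eps -> exists del, 0 < del /\
    forall y, inRn n y -> (forall k, (k < n)%nat -> Rabs (y k - x k) < del) ->
      Rabs (g y - g x) < eps.

(* g is C^infinity on U: there is a family D ds of functions (D ds is the
   iterated partial derivative along the list of directions ds), all
   continuous on U, with D [] = g on U and D (k :: ds) = d/dx_k (D ds) on U. *)
Definition smooth_on (n : nat) (U : point -> Prop) (g : point -> R) : Prop :=
  exists D : list nat -> point -> R,
    (forall x, U x -> D nil x = g x) /\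
    (forall ds x, U x -> cont_at n (D ds) x) /\
    (forall ds k x, (k < n)%nat -> U x ->
       derivable_pt_lim (fun t => D ds (upd x k t)) (x k) (D (k :: ds) x)).

(* Variables are indexed by pairs (i, s):  (i,s) in the even part stands for
   u^{i,s} (s >= 1), (i,s) in the odd part for theta_i^s (s >= 0); i < n.
   A monomial is (E, O): E = sorted (nondecreasing, lexicographic) list of
   even variables with repetition (a multiset), O = strictly increasing list
   of odd variables; it stands for  (prod E) * theta_{O_0} theta_{O_1} ... *)
Definition var := (nat * nat)%type.
Definition Mon := (list var * list var)%type.

Definition pltb (a b : var) : bool :=
  Nat.ltb (fst a) (fst b) || (Nat.eqb (fst a) (fst b) && Nat.ltb (snd a) (snd b)).
Definition pleb (a b : var) : bool :=
  pltb a b || (Nat.eqb (fst a) (fst b) && Nat.eqb (snd a) (snd b)).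

Fixpoint sortedb (r : var -> var -> bool) (l : list var) : bool :=
  match l with
  | x :: ((y :: _) as t) => r x y && sortedb r t
  | _ => true
  end.

Definition validM (n : nat) (m : Mon) : Prop :=
  sortedb pleb (fst m) = true /\ sortedb pltb (snd m) = true /\
  Forall (fun v => (fst v < n)%nat /\ (1 <= snd v)%nat) (fst m) /\
  Forall (fun v => (fst v < n)%nat) (snd m).

Fixpoint insE (v : var) (E : list var) : list var :=
  match E with
  | [] => [v]
  | w :: E' => if pleb v w then v :: E else w :: insE v E'
  end.

Fixpoint cnt (v : var) (E : list var) : nat :=
  match E with
  | [] => 0
  | w :: E' => (if Nat.eqb (fst v) (fst w) && Nat.eqb (snd v) (snd w) then 1 else 0) + cnt v E'
  end.

Fixpoint remove_nth (j : nat) (l : list var) : list var :=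
  match j, l with
  | _, [] => []
  | O, _ :: l' => l'
  | S j', x :: l' => x :: remove_nth j' l'
  end.

Fixpoint sumR (k : nat) (F : nat -> R) : R :=
  match k with O => 0 | S k' => sumR k' F + F k' end.

(* An element of \hat A is given by its coefficients (functions on U) at all
   monomials; since each degree contains finitely many monomials, arbitrary
   coefficient families are exactly the elements of the graded completion.
   An element of \hat A[lambda] is given by its lambda-coefficients. *)
Definition coef := point -> R.
Definition elA := Mon -> coef.
Definition elAl := nat -> elA.

Definition zeroA : elA := fun _ _ => 0.
Definition zeroAl : elAl := fun _ => zeroA.

Definition eqA (n : nat) (U : point -> Prop) (x y : elA) : Prop :=
  forall m, validM n m -> forall p, U p -> x m p = y m p.
Definition eqAl (n : nat) (U : point -> Prop) (x y : elAl) : Prop :=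
  forall k, eqA n U (x k) (y k).

Definition inA (n : nat) (U : point -> Prop) (x : elA) : Prop :=
  forall m, validM n m -> smooth_on n U (x m).
Definition inAl (n : nat) (U : point -> Prop) (x : elAl) : Prop :=
  (exists N, forall k, (N <= k)%nat -> eqA n U (x k) zeroA) /\
  (forall k, inA n U (x k)).

(* \hat C = C^oo(U)[[theta_j^0, theta_j^1]] *)
Definition inC (n : nat) (U : point -> Prop) (x : elA) : Prop :=
  inA n U x /\
  forall m, validM n m ->
    ~ (fst m = [] /\ Forall (fun v => (snd v <= 1)%nat) (snd m)) ->
    forall p, U p -> x m p = 0.
Definition inCl (n : nat) (U : point -> Prop) (x : elAl) : Prop :=
  inAl n U x /\ forall k, inC n U (x k).

(* \hat C_i = \hat C[[u^{i,s}, theta_i^{s+1} : s >= 1]] *)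
Definition inCi (n : nat) (U : point -> Prop) (i : nat) (x : elA) : Prop :=
  inA n U x /\
  forall m, validM n m ->
    ~ (Forall (fun v => fst v = i) (fst m) /\
       Forall (fun v => (snd v <= 1)%nat \/ fst v = i) (snd m)) ->
    forall p, U p -> x m p = 0.

(* d_i = sum_{s>=1} theta_i^{s+1} d/du^{i,s}  (left multiplication by theta,
   reordering the odd variables with the Koszul sign). *)
Definition dop (i : nat) (x : elA) : elA :=
  fun m p =>
    let E := fst m in let Od := snd m in
    sumR (length Od) (fun j =>
      let v := nth j Od (0%nat, 0%nat) in
      if Nat.eqb (fst v) i && Nat.leb 2 (snd v) then
        (-1) ^ j * INR (cnt (i, (snd v - 1)%nat) E + 1) *
        x (insE (i, (snd v - 1)%nat) E, remove_nth j Od) p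
      else 0).

(* Delta_{-1} = sum_i (u^i - lambda) f^i d_i on \hat A[lambda] *)
Definition DeltaM1 (n : nat) (f : nat -> coef) (x : elAl) : elAl :=
  fun k m p =>
    sumR n (fun i => f i p *
      (p i * dop i (x k) m p -
       match k with O => 0 | S k' => dop i (x k') m p end)).

Definition constL (a : elA) : elAl :=
  fun k => match k with O => a | S _ => zeroA end.

Definition combo (n : nat) (c : elAl) (y : nat -> elA) : elAl :=
  fun k m p => c k m p + constL (fun m' p' => sumR n (fun i => dop i (y i) m' p')) k m p.

Definition addAl (x y : elAl) : elAl := fun k m p => x k m p + y k m p.

From Stdlib Require Import Reals List Arith Lia Bool Lra Classical FunctionalExtensionality.
Import ListNotations.
Open Scope R_scope.

(* Delta_{-1} = sum_i f^i (u^i - lambda) d_i, where d_i = sum_s theta_i^{s+1} d/du^{i,s} is a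
   Koszul differential. With N_i the i-weight of a monomial (its degree in u^{i,*} and
   theta_i^{>=2}), the operator h_i = N_i^{-1} sum_s u^{i,s} d/dtheta_i^{s+1} satisfies
   d_i h_i + h_i d_i = 1 on monomials of nonzero i-weight and d_j h_i + h_i d_j = 0 for j <> i.
   All these operators preserve every weight, so the complex splits according to the set of
   active indices (those of nonzero weight) of a monomial.
   - No active index: these monomials span \hat C and are killed by every d_i.
   - Only i active: Delta_{-1} = f^i (u^i - lambda) d_i, so a cocycle z(lambda) has d_i z = 0,
     hence z = d_i W with W = h_i z. Dividing W(lambda) - W(u^i) by lambda - u^i shows that z is
     cohomologous to d_i y with y = W(u^i) = sum_k (u^i)^k h_i z_k in \hat C_i.
   - Two active indices i <> k: alpha h_i + beta h_k with alpha = 1/(f^i (u^i - u^k)) and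
     beta = -1/(f^k (u^i - u^k)) is a contracting homotopy; this is where u^i <> u^k is used.
   Injectivity follows the same split: on monomials with only i active, the coefficients of
   d_i b satisfy D_l = u^i D_{l+1}, which forces d_i b = 0 for a polynomial b. *)

(** * Finite sums *)

Lemma sumR_ext k F G : (forall j, (j < k)%nat -> F j = G j) -> sumR k F = sumR k G.
Proof. induction k; simpl; intros H; auto. rewrite IHk, H; auto. Qed.

Lemma sumR_plus k F G : sumR k (fun j => F j + G j) = sumR k F + sumR k G.
Proof. induction k; simpl; [ring|]. rewrite IHk; ring. Qed.

Lemma sumR_scal k c F : c * sumR k F = sumR k (fun j => c * F j).
Proof. induction k; simpl; [ring|]. rewrite <- IHk; ring. Qed.

Lemma sumR_zero k F : (forall j, (j < k)%nat -> F j = 0) -> sumR k F = 0.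
Proof. induction k; simpl; intros H; auto. rewrite IHk, H; auto. ring. Qed.

Lemma sumR_swap k l G : sumR k (fun s => sumR l (fun t => G s t)) = sumR l (fun t => sumR k (fun s => G s t)).
Proof.
  induction k; simpl. symmetry; apply sumR_zero; auto.
  rewrite IHk. rewrite <- sumR_plus. auto.
Qed.

Lemma sumR_delta k t g : sumR k (fun s => if Nat.eqb s t then g s else 0) = if Nat.ltb t k then g t else 0.
Proof.
  induction k; simpl. auto. rewrite IHk.
  destruct (Nat.eqb k t) eqn:E1; [apply Nat.eqb_eq in E1; subst|apply Nat.eqb_neq in E1].
  - destruct (Nat.ltb t t) eqn:E2; [apply Nat.ltb_lt in E2; lia|].
    destruct (Nat.ltb t (S t)) eqn:E3; [ring|apply Nat.ltb_ge in E3; lia].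
  - destruct (Nat.ltb t k) eqn:E2; destruct (Nat.ltb t (S k)) eqn:E3;
      rewrite ?Nat.ltb_lt, ?Nat.ltb_ge in *; try lia; ring.
Qed.

Lemma sumR_shift k F : sumR (S k) F = F 0%nat + sumR k (fun j => F (S j)).
Proof. induction k; simpl in *. ring. rewrite IHk. ring. Qed.

Lemma sumR_trunc K M F : (forall s, (M <= s)%nat -> F s = 0) -> (M <= K)%nat -> sumR K F = sumR M F.
Proof.
  intros H HK. induction K. assert (M = 0%nat) by lia; subst; auto.
  destruct (Nat.eq_dec M (S K)); [subst; auto|]. simpl. rewrite IHK by lia. rewrite H by lia. ring.
Qed.

Lemma sumR_diag k G : (forall s t, s <> t -> G s t = 0) ->
  sumR k (fun s => sumR k (fun t => G s t)) = sumR k (fun s => G s s).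
Proof.
  intros H. apply sumR_ext. intros s Hs.
  transitivity (sumR k (fun t => if Nat.eqb t s then G s t else 0)).
  - apply sumR_ext. intros t _. destruct (Nat.eqb t s) eqn:E; auto. apply H. apply Nat.eqb_neq in E; auto.
  - rewrite sumR_delta. apply Nat.ltb_lt in Hs. rewrite Hs. auto.
Qed.

Lemma sumR_antisym k G : (forall s t, G s t + G t s = 0) ->
  sumR k (fun s => sumR k (fun t => G s t)) = 0.
Proof.
  intros H. set (S := sumR k (fun s => sumR k (fun t => G s t))).
  assert (S + S = 0).
  { unfold S at 2. rewrite sumR_swap. unfold S. rewrite <- sumR_plus.
    apply sumR_zero. intros. rewrite <- sumR_plus. apply sumR_zero. intros. apply H. }
  lra.
Qed.
Lemma sumR_opp k F : sumR k (fun j => - F j) = - sumR k F.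
Proof. induction k; simpl; [ring|]. rewrite IHk; ring. Qed.

Lemma sumR_delta_l n j (X : R) : sumR n (fun i => if Nat.eqb j i then X else 0) = if Nat.ltb j n then X else 0.
Proof.
  rewrite <- (sumR_delta n j (fun _ => X)). apply sumR_ext. intros; rewrite Nat.eqb_sym; auto.
Qed.

Lemma sumR_single n i (F : nat -> R) : (i < n)%nat -> (forall j, (j < n)%nat -> j <> i -> F j = 0) -> sumR n F = F i.
Proof.
  intros Hi H. transitivity (sumR n (fun j => if Nat.eqb j i then F j else 0)).
  - apply sumR_ext. intros j Hj. destruct (Nat.eqb j i) eqn:E; auto. apply H; auto. apply Nat.eqb_neq; auto.
  - rewrite sumR_delta. apply Nat.ltb_lt in Hi. rewrite Hi; auto.
Qed.

Lemma sumR_lincomb2 K (A B : nat -> R) a b :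
  sumR K (fun j => a * A j - b * B j) = a * sumR K A - b * sumR K B.
Proof. induction K; simpl; [ring|]. rewrite IHK; ring. Qed.

Lemma sumR_lincomb3 K (A B C : nat -> R) a b :
  sumR K (fun j => A j - a * B j - b * C j) = sumR K A - a * sumR K B - b * sumR K C.
Proof. induction K; simpl; [ring|]. rewrite IHK; ring. Qed.

Lemma geometric_descent_zero (D : nat -> R) a N : (forall k, D k = a * D (S k)) -> (forall k, (N <= k)%nat -> D k = 0) ->
  forall k, D k = 0.
Proof.
  intros H1 H2. assert (forall d k, (N <= k + d)%nat -> D k = 0).
  { induction d; intros k Hk. apply H2; lia. rewrite H1, (IHd (S k)) by lia. ring. }
  intros k. apply (H N k). lia.
Qed.

(* With Q_l = sum_{k>l} u^{k-1-l} W_k this is W(lambda) = W(u) + (lambda - u) Q(lambda),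
   coefficient by coefficient. *)
Lemma polynomial_division_identity (W : nat -> R) N u : (forall k, (N <= k)%nat -> W k = 0) -> forall l,
  (match l with O => sumR N (fun k => u ^ k * W k)
     | S l' => sumR N (fun k => if Nat.ltb l' k then u ^ (k - 1 - l') * W k else 0) end)
  - u * sumR N (fun k => if Nat.ltb l k then u ^ (k - 1 - l) * W k else 0) = W l.
Proof.
  intros HW l.
  assert (Hd : forall t, sumR N (fun k => if Nat.eqb k t then W k else 0) = W t).
  { intros t. rewrite sumR_delta. destruct (Nat.ltb t N) eqn:E; auto. apply Nat.ltb_ge in E. rewrite HW; auto. }
  rewrite sumR_scal. unfold Rminus.
  rewrite <- (Hd l).
  transitivity (sumR N (fun k => (match l with O => u ^ k * W k | S l' => if Nat.ltb l' k then u ^ (k - 1 - l') * W k else 0 end)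
     + - (u * (if Nat.ltb l k then u ^ (k - 1 - l) * W k else 0)))).
  - rewrite sumR_plus, sumR_opp. f_equal. destruct l; auto.
  - apply sumR_ext. intros k _. destruct l as [|l'].
    + destruct k as [|k]; simpl.
      * ring.
      * replace (k - 0 - 0)%nat with k by lia. ring.
    + destruct (Nat.ltb l' k) eqn:E1, (Nat.ltb (S l') k) eqn:E2, (Nat.eqb k (S l')) eqn:E3;
        rewrite ?Nat.ltb_lt, ?Nat.ltb_ge, ?Nat.eqb_eq, ?Nat.eqb_neq in *; try lia; try ring.
      * replace (k - 1 - l')%nat with (S (k - 1 - S l')) by lia. simpl. ring.
      * subst. replace (S l' - 1 - l')%nat with 0%nat by lia. simpl. ring.
Qed.

(** * Monomials as sorted lists *)

Definition var_eqb (a b : var) : bool := Nat.eqb (fst a) (fst b) && Nat.eqb (snd a) (snd b).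

Lemma var_eqb_eq a b : var_eqb a b = true <-> a = b.
Proof.
  destruct a as [a1 a2], b as [b1 b2]; unfold var_eqb; simpl.
  rewrite andb_true_iff, !Nat.eqb_eq; split.
  - intros [-> ->]; auto.
  - intros H; inversion H; auto.
Qed.

Lemma var_eqb_refl a : var_eqb a a = true.
Proof. apply var_eqb_eq; auto. Qed.

Lemma var_eqb_neq a b : var_eqb a b = false <-> a <> b.
Proof.
  split; intros H.
  - intros E; subst; rewrite var_eqb_refl in H; discriminate.
  - destruct (var_eqb a b) eqn:E; auto. apply var_eqb_eq in E; contradiction.
Qed.

Lemma var_eqb_sym a b : var_eqb a b = var_eqb b a.
Proof.
  destruct (var_eqb a b) eqn:E; symmetry.
  - apply var_eqb_eq in E; subst; apply var_eqb_refl.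
  - apply var_eqb_neq in E; apply var_eqb_neq; auto.
Qed.

Lemma var_eq_dec (a b : var) : {a = b} + {a <> b}.
Proof. destruct (var_eqb a b) eqn:E; [left; apply var_eqb_eq; auto | right; apply var_eqb_neq; auto]. Qed.

Lemma pltb_iff a b : pltb a b = true <-> (fst a < fst b \/ (fst a = fst b /\ snd a < snd b))%nat.
Proof.
  unfold pltb; rewrite orb_true_iff, andb_true_iff, !Nat.ltb_lt, Nat.eqb_eq; tauto.
Qed.

Lemma pltb_irrefl a : pltb a a = false.
Proof. destruct (pltb a a) eqn:E; auto. apply pltb_iff in E; lia. Qed.

Lemma pltb_trans a b c : pltb a b = true -> pltb b c = true -> pltb a c = true.
Proof. rewrite !pltb_iff; lia. Qed.

Lemma pltb_asym a b : pltb a b = true -> pltb b a = false.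
Proof. intros H; destruct (pltb b a) eqn:E; auto. rewrite pltb_iff in *; lia. Qed.

Lemma pltb_total a b : a <> b -> pltb a b = true \/ pltb b a = true.
Proof.
  intros H; destruct a as [a1 a2], b as [b1 b2]; rewrite !pltb_iff; simpl.
  destruct (Nat.eq_dec a1 b1); destruct (Nat.eq_dec a2 b2); subst; try congruence; lia.
Qed.

Lemma pleb_iff a b : pleb a b = true <-> pltb a b = true \/ a = b.
Proof.
  unfold pleb; rewrite orb_true_iff, andb_true_iff, !Nat.eqb_eq.
  destruct a as [a1 a2], b as [b1 b2]; simpl; split.
  - intros [H|[-> ->]]; auto.
  - intros [H|H]; auto. inversion H; auto.
Qed.

Lemma pleb_trans a b c : pleb a b = true -> pleb b c = true -> pleb a c = true.
Proof.
  rewrite !pleb_iff; intros [H|H] [H'|H']; subst; auto. left; eapply pltb_trans; eauto.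
Qed.

Lemma pleb_antisym a b : pleb a b = true -> pleb b a = true -> a = b.
Proof.
  rewrite !pleb_iff; intros [H|H] [H'|H']; auto.
  rewrite (pltb_asym _ _ H) in H'; discriminate.
Qed.

Lemma pleb_false_pltb a b : pleb a b = false -> pltb b a = true.
Proof.
  intros H. destruct (var_eq_dec a b). { subst. unfold pleb in H. rewrite !Nat.eqb_refl in H.
  rewrite orb_true_r in H; discriminate. }
  destruct (pltb_total a b n) as [H'|H']; auto.
  unfold pleb in H; rewrite H' in H; discriminate.
Qed.

Lemma sortedb_cons (r : var -> var -> bool) (rt : forall a b c, r a b = true -> r b c = true -> r a c = true) a l :
  sortedb r (a :: l) = true <-> sortedb r l = true /\ Forall (fun x => r a x = true) l.
Proof.
  revert a; induction l as [|b l IH]; intros a; simpl.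
  - split; auto.
  - rewrite andb_true_iff. split.
    + intros [H1 H2]. split; auto. constructor; auto.
      fold (sortedb r (b :: l)) in H2. apply IH in H2. destruct H2 as [_ H2].
      eapply Forall_impl; [|exact H2]. intros x Hx; eauto.
    + intros [H1 H2]. inversion H2; subst. split; auto.
Qed.

Lemma sortedb_pleb_cons a l : sortedb pleb (a :: l) = true <-> sortedb pleb l = true /\ Forall (fun x => pleb a x = true) l.
Proof. apply sortedb_cons. apply pleb_trans. Qed.
Lemma sortedb_pltb_cons a l : sortedb pltb (a :: l) = true <-> sortedb pltb l = true /\ Forall (fun x => pltb a x = true) l.
Proof. apply sortedb_cons. apply pltb_trans. Qed.

Lemma sortedb_pltb_pleb l : sortedb pltb l = true -> sortedb pleb l = true.
Proof.
  induction l as [|a l IH]; auto. rewrite sortedb_pltb_cons, sortedb_pleb_cons. intros [H1 H2]; split; auto.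
  eapply Forall_impl; [|exact H2]. intros x Hx; apply pleb_iff; auto.
Qed.

Fixpoint countp (P : var -> bool) (l : list var) : nat :=
  match l with [] => 0%nat | a :: t => ((if P a then 1 else 0) + countp P t)%nat end.

Lemma cnt_countp v l : cnt v l = countp (var_eqb v) l.
Proof. induction l; simpl; auto. Qed.

Lemma countp_ext P Q l : (forall x, In x l -> P x = Q x) -> countp P l = countp Q l.
Proof. induction l as [|a l IH]; simpl; auto. intros H. rewrite H, IH; auto. Qed.

Lemma countp_zero P l : countp P l = 0%nat <-> Forall (fun x => P x = false) l.
Proof.
  induction l as [|a l IH]; simpl. split; auto.
  destruct (P a) eqn:E; split; intros H; try lia.
  - inversion H; congruence.
  - constructor; auto; apply IH; auto.
  - inversion H; apply IH; auto.
Qed.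

Lemma countp_pos P l : (0 < countp P l)%nat <-> exists x, In x l /\ P x = true.
Proof.
  induction l as [|a l IH]; simpl. split; [lia| intros [x [[] _]]].
  destruct (P a) eqn:E; split; intros H.
  - eauto.
  - lia.
  - apply IH in H. destruct H as [x [H1 H2]]; eauto.
  - apply IH. destruct H as [x [[H1|H1] H2]]; subst; eauto. congruence.
Qed.

Lemma countp_insE P v l : countp P (insE v l) = ((if P v then 1 else 0) + countp P l)%nat.
Proof.
  induction l as [|a l IH]; simpl; auto. destruct (pleb v a); simpl; auto. rewrite IH; lia.
Qed.

Lemma In_insE x v l : In x (insE v l) <-> x = v \/ In x l.
Proof.
  induction l as [|a l IH]; simpl. split; intros; intuition (subst; auto).
  destruct (pleb v a); simpl. split; intros; intuition (subst; auto). rewrite IH; split; intros; intuition (subst; auto).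
Qed.

Lemma insE_sorted v l : sortedb pleb l = true -> sortedb pleb (insE v l) = true.
Proof.
  induction l as [|a l IH]; simpl; auto. intros H.
  destruct (pleb v a) eqn:E.
  - apply sortedb_pleb_cons; split; auto. apply sortedb_pleb_cons in H. destruct H as [_ H].
    constructor; auto. eapply Forall_impl; [|exact H]. intros x Hx; eapply pleb_trans; eauto.
  - apply sortedb_pleb_cons in H; destruct H as [H1 H2]. apply sortedb_pleb_cons; split; auto.
    apply Forall_forall; intros x Hx. apply In_insE in Hx. destruct Hx as [->|Hx].
    + apply pleb_iff; left; apply pleb_false_pltb; auto.
    + rewrite Forall_forall in H2; auto.
Qed.

Lemma insE_strict v l : sortedb pltb l = true -> ~ In v l -> sortedb pltb (insE v l) = true.
Proof.
  induction l as [|a l IH]; simpl; auto. intros H Hn.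
  apply sortedb_pltb_cons in H; destruct H as [H1 H2].
  destruct (pleb v a) eqn:E.
  - apply sortedb_pltb_cons; split; auto. apply sortedb_pltb_cons; split; auto.
    apply pleb_iff in E. destruct E as [E|E]; [|subst; tauto].
    constructor; auto. eapply Forall_impl; [|exact H2]. intros x Hx; eapply pltb_trans; eauto.
  - apply sortedb_pltb_cons; split; auto.
    apply Forall_forall; intros x Hx. apply In_insE in Hx. destruct Hx as [->|Hx].
    + apply pleb_false_pltb; auto.
    + rewrite Forall_forall in H2; auto.
Qed.

Fixpoint remove_one (w : var) (l : list var) : list var :=
  match l with [] => [] | a :: t => if var_eqb w a then t else a :: remove_one w t end.

Lemma countp_remove_one P w l : In w l -> countp P (remove_one w l) = (countp P l - (if P w then 1 else 0))%nat.
Proof.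
  induction l as [|a l IH]; simpl. tauto. intros H.
  destruct (var_eqb w a) eqn:E.
  - apply var_eqb_eq in E; subst. destruct (P a); lia.
  - apply var_eqb_neq in E. destruct H as [H|H]; [congruence|]. simpl. rewrite IH; auto.
    assert (countp P l >= (if P w then 1 else 0))%nat.
    { destruct (P w) eqn:Pw; [|lia]. assert (0 < countp P l)%nat; [apply countp_pos; eauto|lia]. }
    destruct (P a); lia.
Qed.

Lemma In_remove_one x w l : In x (remove_one w l) -> In x l.
Proof. induction l as [|a l IH]; simpl; auto. destruct (var_eqb w a); simpl; tauto. Qed.

Lemma remove_one_sorted w l : sortedb pleb l = true -> sortedb pleb (remove_one w l) = true.
Proof.
  induction l as [|a l IH]; simpl; auto. intros H. apply sortedb_pleb_cons in H; destruct H as [H1 H2].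
  destruct (var_eqb w a); auto. apply sortedb_pleb_cons; split; auto.
  rewrite Forall_forall in *; intros x Hx; apply H2; eapply In_remove_one; eauto.
Qed.

Definition remove_all (v : var) (l : list var) : list var := filter (fun o => negb (var_eqb v o)) l.

Lemma countp_remove_all P v l : countp P (remove_all v l) = countp (fun o => P o && negb (var_eqb v o)) l.
Proof.
  induction l as [|a l IH]; unfold remove_all in *; simpl; auto. destruct (var_eqb v a); simpl; destruct (P a); simpl; lia.
Qed.

Lemma In_remove_all x v l : In x (remove_all v l) <-> In x l /\ x <> v.
Proof.
  unfold remove_all; rewrite filter_In. rewrite negb_true_iff, var_eqb_neq. split; intros [H1 H2]; split; auto.
Qed.

Lemma sortedb_filter (r : var -> var -> bool) (rt : forall a b c, r a b = true -> r b c = true -> r a c = true) Q l :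
  sortedb r l = true -> sortedb r (filter Q l) = true.
Proof.
  induction l as [|a l IH]; simpl; auto. intros H. apply (sortedb_cons r rt) in H; destruct H as [H1 H2].
  destruct (Q a); auto. apply (sortedb_cons r rt); split; auto.
  rewrite Forall_forall in *; intros x Hx; apply filter_In in Hx; apply H2; tauto.
Qed.

Lemma remove_all_strict v l : sortedb pltb l = true -> sortedb pltb (remove_all v l) = true.
Proof. apply sortedb_filter, pltb_trans. Qed.
Lemma remove_all_sorted v l : sortedb pleb l = true -> sortedb pleb (remove_all v l) = true.
Proof. apply sortedb_filter, pleb_trans. Qed.

Lemma sorted_eq_of_cnt l1 l2 : sortedb pleb l1 = true -> sortedb pleb l2 = true ->
  (forall u, cnt u l1 = cnt u l2) -> l1 = l2.
Proof.
  revert l2; induction l1 as [|a l1 IH]; intros [|b l2] H1 H2 Hc.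
  - auto.
  - specialize (Hc b); rewrite !cnt_countp in Hc; simpl in Hc; rewrite var_eqb_refl in Hc; simpl in Hc; lia.
  - specialize (Hc a); rewrite !cnt_countp in Hc; simpl in Hc; rewrite var_eqb_refl in Hc; simpl in Hc; lia.
  - apply sortedb_pleb_cons in H1; apply sortedb_pleb_cons in H2.
    destruct H1 as [H1 F1]; destruct H2 as [H2 F2].
    assert (ab : a = b).
    { apply pleb_antisym.
      - destruct (var_eq_dec a b) as [->|Hne]; [apply pleb_iff; auto|].
        assert (Hb : In b (a :: l1)).
        { assert (0 < countp (var_eqb b) (a :: l1))%nat.
          { rewrite <- cnt_countp, Hc, cnt_countp. simpl. rewrite var_eqb_refl; simpl; lia. }
          apply countp_pos in H. destruct H as [x [Hx Hx']]. apply var_eqb_eq in Hx'; subst; auto. }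
        destruct Hb as [Hb|Hb]; [congruence|]. rewrite Forall_forall in F1; auto.
      - destruct (var_eq_dec a b) as [->|Hne]; [apply pleb_iff; auto|].
        assert (Ha : In a (b :: l2)).
        { assert (0 < countp (var_eqb a) (b :: l2))%nat.
          { rewrite <- cnt_countp, <- Hc, cnt_countp. simpl. rewrite var_eqb_refl; simpl; lia. }
          apply countp_pos in H. destruct H as [x [Hx Hx']]. apply var_eqb_eq in Hx'; subst; auto. }
        destruct Ha as [Ha|Ha]; [congruence|]. rewrite Forall_forall in F2; auto. }
    subst. f_equal. apply IH; auto. intros u; specialize (Hc u). rewrite !cnt_countp in *. simpl in Hc. lia.
Qed.

Lemma cnt_strict_le1 v l : sortedb pltb l = true -> (cnt v l <= 1)%nat.
Proof.
  induction l as [|a l IH]; simpl. lia. intros H. apply sortedb_pltb_cons in H; destruct H as [H1 H2].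
  destruct (Nat.eqb (fst v) (fst a) && Nat.eqb (snd v) (snd a)) eqn:E.
  - fold (var_eqb v a) in E. apply var_eqb_eq in E; subst.
    assert (cnt a l = 0%nat); [|lia]. rewrite cnt_countp. apply countp_zero.
    rewrite Forall_forall in *; intros x Hx. apply var_eqb_neq. intros ->. specialize (H2 x Hx).
    rewrite pltb_irrefl in H2; discriminate.
  - simpl; auto.
Qed.

Lemma cnt_pos_iff_In v l : (0 < cnt v l)%nat <-> In v l.
Proof.
  rewrite cnt_countp, countp_pos. split.
  - intros [x [Hx Hx']]; apply var_eqb_eq in Hx'; subst; auto.
  - intros H; exists v; split; auto; apply var_eqb_refl.
Qed.

Lemma cnt_insE u v l : cnt u (insE v l) = ((if var_eqb u v then 1 else 0) + cnt u l)%nat.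
Proof. rewrite !cnt_countp, countp_insE; auto. Qed.

Lemma cnt_remove_one u w l : In w l -> cnt u (remove_one w l) = (cnt u l - (if var_eqb u w then 1 else 0))%nat.
Proof. intros H; rewrite !cnt_countp, countp_remove_one; auto. Qed.

Lemma cnt_remove_all u v l : cnt u (remove_all v l) = (if var_eqb u v then 0 else cnt u l)%nat.
Proof.
  rewrite !cnt_countp, countp_remove_all. destruct (var_eqb u v) eqn:E.
  - apply var_eqb_eq in E; subst. apply countp_zero, Forall_forall. intros x _.
    destruct (var_eqb v x); auto.
  - apply countp_ext. intros x _. destruct (var_eqb u x) eqn:E2; simpl; auto.
    apply var_eqb_eq in E2; subst. rewrite var_eqb_sym, E; auto.
Qed.

Definition memb (v : var) (l : list var) : bool := Nat.ltb 0 (cnt v l).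

Lemma memb_true v l : memb v l = true <-> In v l.
Proof. unfold memb; rewrite Nat.ltb_lt; apply cnt_pos_iff_In. Qed.
Lemma memb_false v l : memb v l = false <-> ~ In v l.
Proof. rewrite <- memb_true. destruct (memb v l); split; congruence. Qed.
Lemma memb_remove_all u v l : u <> v -> memb u (remove_all v l) = memb u l.
Proof. intros H. unfold memb. rewrite cnt_remove_all. apply var_eqb_neq in H. rewrite H; auto. Qed.
Lemma memb_remove_all_self v l : memb v (remove_all v l) = false.
Proof. unfold memb. rewrite cnt_remove_all, var_eqb_refl; auto. Qed.
Lemma memb_insE u v l : u <> v -> memb u (insE v l) = memb u l.
Proof. intros H. unfold memb. rewrite cnt_insE. apply var_eqb_neq in H. rewrite H; auto. Qed.
Lemma memb_insE_self v l : memb v (insE v l) = true.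
Proof. unfold memb. rewrite cnt_insE, var_eqb_refl; auto. Qed.

Lemma cnt_strict_memb v O : sortedb pltb O = true -> memb v O = true -> cnt v O = 1%nat.
Proof. intros H1 H2. unfold memb in H2. apply Nat.ltb_lt in H2. pose proof (cnt_strict_le1 v O H1). lia. Qed.

Lemma cnt_remove_one_other u w l : In w l -> var_eqb u w = false -> cnt u (remove_one w l) = cnt u l.
Proof. intros H1 H2. rewrite cnt_remove_one, H2; auto; lia. Qed.

Lemma insE_comm a b E : sortedb pleb E = true -> insE a (insE b E) = insE b (insE a E).
Proof.
  intros H. apply sorted_eq_of_cnt; repeat apply insE_sorted; auto.
  intros u. rewrite !cnt_insE. lia.
Qed.

Lemma remove_all_comm a b O : sortedb pltb O = true -> remove_all a (remove_all b O) = remove_all b (remove_all a O).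
Proof.
  intros H. apply sortedb_pltb_pleb in H. apply sorted_eq_of_cnt; repeat apply remove_all_sorted; auto.
  intros u. rewrite !cnt_remove_all. destruct (var_eqb u a), (var_eqb u b); auto.
Qed.

Lemma remove_one_insE w E : sortedb pleb E = true -> remove_one w (insE w E) = E.
Proof.
  intros H. apply sorted_eq_of_cnt; auto. apply remove_one_sorted, insE_sorted; auto.
  intros u. rewrite cnt_remove_one; [|apply In_insE; auto]. rewrite cnt_insE. destruct (var_eqb u w); lia.
Qed.

Lemma insE_remove_one w E : sortedb pleb E = true -> In w E -> insE w (remove_one w E) = E.
Proof.
  intros H Hw. apply sorted_eq_of_cnt; auto. apply insE_sorted, remove_one_sorted; auto.
  intros u. rewrite cnt_insE, cnt_remove_one; auto. destruct (var_eqb u w) eqn:E1; [|lia].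
  apply var_eqb_eq in E1; subst. apply cnt_pos_iff_In in Hw. lia.
Qed.

Lemma insE_remove_all v O : sortedb pltb O = true -> In v O -> insE v (remove_all v O) = O.
Proof.
  intros H Hv. assert (H1 := cnt_strict_memb v O H (proj2 (memb_true _ _) Hv)).
  apply sortedb_pltb_pleb in H. apply sorted_eq_of_cnt; auto. apply insE_sorted, remove_all_sorted; auto.
  intros u. rewrite cnt_insE, cnt_remove_all. destruct (var_eqb u v) eqn:E1; auto.
  apply var_eqb_eq in E1; subst. lia.
Qed.

Lemma remove_all_insE v O : sortedb pltb O = true -> ~ In v O -> remove_all v (insE v O) = O.
Proof.
  intros H Hv. apply sortedb_pltb_pleb in H. apply sorted_eq_of_cnt; auto. apply remove_all_sorted, insE_sorted; auto.
  intros u. rewrite cnt_remove_all, cnt_insE. destruct (var_eqb u v) eqn:E1; auto.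
  apply var_eqb_eq in E1; subst. assert (cnt v O = 0%nat); [|lia].
  destruct (cnt v O) eqn:C; auto. exfalso; apply Hv, cnt_pos_iff_In; lia.
Qed.

Lemma remove_one_insE_comm w w' E : sortedb pleb E = true -> In w E -> w <> w' ->
  remove_one w (insE w' E) = insE w' (remove_one w E).
Proof.
  intros H Hw Hne. apply sorted_eq_of_cnt.
  apply remove_one_sorted, insE_sorted; auto. apply insE_sorted, remove_one_sorted; auto.
  intros u. rewrite cnt_remove_one; [|apply In_insE; auto]. rewrite !cnt_insE, cnt_remove_one; auto.
  destruct (var_eqb u w) eqn:E1, (var_eqb u w') eqn:E2; try lia.
  all: apply var_eqb_eq in E1; subst; try (apply var_eqb_eq in E2; subst; congruence).
  all: apply cnt_pos_iff_In in Hw; lia.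
Qed.

Lemma insE_remove_all_comm v v' O : sortedb pltb O = true -> v <> v' ->
  insE v (remove_all v' O) = remove_all v' (insE v O).
Proof.
  intros H Hne. apply sortedb_pltb_pleb in H. apply sorted_eq_of_cnt.
  apply insE_sorted, remove_all_sorted; auto. apply remove_all_sorted, insE_sorted; auto.
  intros u. rewrite cnt_insE, !cnt_remove_all, cnt_insE.
  destruct (var_eqb u v) eqn:E1, (var_eqb u v') eqn:E2; try lia.
  apply var_eqb_eq in E1; apply var_eqb_eq in E2; subst; congruence.
Qed.

(** * Creation and annihilation operators *)

Definition nbelow (v : var) (O : list var) : nat := countp (fun o => pltb o v) O.
Definition sgn (k : nat) : R := (-1) ^ k.

Lemma sgn_S k : sgn (S k) = - sgn k.
Proof. unfold sgn; simpl; ring. Qed.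
Lemma sgn_sq k : sgn k * sgn k = 1.
Proof. unfold sgn. rewrite <- pow_add. replace (k + k)%nat with (2 * k)%nat by lia.
  rewrite pow_mult. replace ((-1)^2) with 1 by ring. apply pow1. Qed.

(* Coefficientwise: theta_du v w x = theta_v * dx/du_w and u_dtheta w v x = u_w * dx/dtheta_v,
   the sign being the Koszul sign of moving theta_v past the odd variables below it. *)
Definition theta_du (v w : var) (x : elA) : elA := fun m p =>
  if memb v (snd m) then sgn (nbelow v (snd m)) * INR (cnt w (fst m) + 1) * x (insE w (fst m), remove_all v (snd m)) p
  else 0.
Definition u_dtheta (w v : var) (x : elA) : elA := fun m p =>
  if memb w (fst m) && negb (memb v (snd m)) then sgn (nbelow v (snd m)) * x (remove_one w (fst m), insE v (snd m)) p
  else 0.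

Definition sorted_mon (m : Mon) : Prop := sortedb pleb (fst m) = true /\ sortedb pltb (snd m) = true.

Lemma countp_split P v l : countp P l = (countp (fun o => P o && negb (var_eqb v o)) l + (if P v then cnt v l else 0))%nat.
Proof.
  rewrite cnt_countp. induction l as [|a l IH]; cbn [countp]. destruct (P v); auto.
  rewrite IH. destruct (var_eqb v a) eqn:E.
  - pose proof E as E'. apply var_eqb_eq in E'; subst. destruct (P a); simpl; lia.
  - destruct (P a); simpl; lia.
Qed.

Lemma nbelow_remove_all v v' O : nbelow v O = (nbelow v (remove_all v' O) + (if pltb v' v then cnt v' O else 0))%nat.
Proof. unfold nbelow. rewrite countp_remove_all. apply (countp_split (fun o => pltb o v) v'). Qed.

Lemma nbelow_insE v v' O : nbelow v (insE v' O) = ((if pltb v' v then 1 else 0) + nbelow v O)%nat.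
Proof. unfold nbelow; rewrite countp_insE; reflexivity. Qed.

Lemma nbelow_remove_all_self v O : nbelow v (remove_all v O) = nbelow v O.
Proof. rewrite (nbelow_remove_all v v O), pltb_irrefl; lia. Qed.

Lemma nbelow_insE_self v O : nbelow v (insE v O) = nbelow v O.
Proof. rewrite nbelow_insE, pltb_irrefl; lia. Qed.

Lemma theta_du_anticomm v w v' w' x m p : sorted_mon m -> v <> v' ->
  theta_du v w (theta_du v' w' x) m p + theta_du v' w' (theta_du v w x) m p = 0.
Proof.
  intros [HE HO] Hne. destruct m as [E O]; unfold theta_du; simpl in *.
  rewrite (memb_remove_all v' v) by auto. rewrite (memb_remove_all v v') by auto.
  destruct (memb v O) eqn:Hv; destruct (memb v' O) eqn:Hv'; try ring.
  rewrite (insE_comm w' w) by auto. rewrite (remove_all_comm v' v) by auto.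
  set (X := x (insE w (insE w' E), remove_all v (remove_all v' O)) p).
  rewrite !cnt_insE.
  assert (C : forall a b : nat, INR (a + b + 1) = INR a + INR b + 1).
  { intros; rewrite !plus_INR; simpl; ring. }
  rewrite !C.
  assert (Cw : (if var_eqb w' w then 1 else 0)%nat = (if var_eqb w w' then 1 else 0)%nat) by (rewrite var_eqb_sym; auto).
  rewrite Cw.
  assert (Hww : var_eqb w w' = true -> cnt w E = cnt w' E).
  { intros Q; apply var_eqb_eq in Q; subst; auto. }
  destruct (pltb_total v v' Hne) as [L|L].
  -
    assert (Hs1 : nbelow v' O = S (nbelow v' (remove_all v O))).
    { rewrite (nbelow_remove_all v' v O), L, (cnt_strict_memb v O); auto. lia. }
    assert (Hs2 : nbelow v (remove_all v' O) = nbelow v O).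
    { rewrite (nbelow_remove_all v v' O), (pltb_asym _ _ L). lia. }
    rewrite Hs1, Hs2, sgn_S.
    destruct (var_eqb w w') eqn:Q; [rewrite (Hww eq_refl)|]; rewrite ?plus_INR; simpl; ring.
  - assert (Hs1 : nbelow v O = S (nbelow v (remove_all v' O))).
    { rewrite (nbelow_remove_all v v' O), L, (cnt_strict_memb v' O); auto. lia. }
    assert (Hs2 : nbelow v' (remove_all v O) = nbelow v' O).
    { rewrite (nbelow_remove_all v' v O), (pltb_asym _ _ L). lia. }
    rewrite Hs1, Hs2, sgn_S.
    destruct (var_eqb w w') eqn:Q; [rewrite (Hww eq_refl)|]; rewrite ?plus_INR; simpl; ring.
Qed.

Lemma theta_du_twice v w w' x m p : theta_du v w (theta_du v w' x) m p = 0.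
Proof.
  destruct m as [E O]; unfold theta_du; simpl. rewrite memb_remove_all_self. destruct (memb v O); ring.
Qed.

Lemma theta_du_u_dtheta_anticomm v w v' w' x m p : sorted_mon m -> v <> v' -> w <> w' ->
  theta_du v' w' (u_dtheta w v x) m p + u_dtheta w v (theta_du v' w' x) m p = 0.
Proof.
  intros [HE HO] Hne Hne'. destruct m as [E O]; unfold theta_du, u_dtheta; simpl in *.
  rewrite (memb_insE w w') by auto. rewrite (memb_remove_all v v') by auto.
  rewrite (memb_insE v' v) by auto.
  destruct (memb v' O) eqn:Hv'; destruct (memb w E) eqn:Hw; destruct (memb v O) eqn:Hv; simpl; try ring.
  apply memb_true in Hw. apply memb_false in Hv.
  rewrite (remove_one_insE_comm w w' E) by auto. rewrite (insE_remove_all_comm v v' O) by auto.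
  rewrite (cnt_remove_one_other w' w E) by (auto; apply var_eqb_neq; auto).
  set (X := x (insE w' (remove_one w E), remove_all v' (insE v O)) p).
  destruct (pltb_total v v' Hne) as [L|L].
  - assert (Hs1 : nbelow v (remove_all v' O) = nbelow v O).
    { rewrite (nbelow_remove_all v v' O), (pltb_asym _ _ L). lia. }
    assert (Hs2 : nbelow v' (insE v O) = S (nbelow v' O)).
    { rewrite nbelow_insE, L. lia. }
    rewrite Hs1, Hs2, sgn_S. ring.
  - assert (Hs1 : nbelow v O = S (nbelow v (remove_all v' O))).
    { rewrite (nbelow_remove_all v v' O), L, (cnt_strict_memb v' O); auto. lia. }
    assert (Hs2 : nbelow v' (insE v O) = nbelow v' O).
    { rewrite nbelow_insE, (pltb_asym _ _ L). lia. }
    rewrite Hs1, Hs2, sgn_S. ring.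
Qed.

Lemma theta_du_u_dtheta_number v w x m p : sorted_mon m ->
  theta_du v w (u_dtheta w v x) m p + u_dtheta w v (theta_du v w x) m p =
  (INR (cnt w (fst m)) + (if memb v (snd m) then 1 else 0)) * x m p.
Proof.
  intros [HE HO]. destruct m as [E O]; unfold theta_du, u_dtheta; simpl in *.
  rewrite memb_insE_self, memb_remove_all_self, memb_insE_self. simpl.
  rewrite nbelow_remove_all_self, nbelow_insE_self.
  destruct (memb v O) eqn:Hv; simpl.
  - rewrite remove_one_insE by auto. rewrite insE_remove_all by (auto; apply memb_true; auto).
    rewrite plus_INR. simpl. rewrite andb_false_r.
    transitivity ((sgn (nbelow v O) * sgn (nbelow v O)) * (INR (cnt w E)+1) * x (E,O) p); [ring|].
    rewrite sgn_sq; ring.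
  - destruct (memb w E) eqn:Hw; simpl.
    + apply memb_true in Hw. apply memb_false in Hv.
      rewrite insE_remove_one, remove_all_insE by auto.
      rewrite cnt_remove_one, var_eqb_refl by auto.
      assert (0 < cnt w E)%nat by (apply cnt_pos_iff_In; auto).
      replace (cnt w E - 1 + 1)%nat with (cnt w E) by lia.
      replace (sgn (nbelow v O) * (sgn (nbelow v O) * INR (cnt w E) * x (E, O) p))
        with ((sgn (nbelow v O) * sgn (nbelow v O)) * INR (cnt w E) * x (E, O) p) by ring.
      rewrite sgn_sq. ring.
    + assert (cnt w E = 0%nat).
      { unfold memb in Hw. apply Nat.ltb_ge in Hw. lia. }
      rewrite H. simpl. ring.
Qed.

(** * The differentials d_i and their contracting homotopies *)

Definition list_level (l : list var) : nat := fold_right (fun v a => Nat.max (snd v) a) 0%nat l.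
Definition level (m : Mon) : nat := Nat.max (list_level (fst m)) (list_level (snd m)).
Definition levels_bounded (K : nat) (m : Mon) : Prop :=
  forall v, In v (fst m) \/ In v (snd m) -> (snd v <= K)%nat.

Lemma list_level_le l K : (list_level l <= K)%nat <-> forall v, In v l -> (snd v <= K)%nat.
Proof.
  induction l as [|a l IH]; simpl. split; intros; [tauto|lia].
  split.
  - intros H v [->|Hv]; [lia|]. apply IH; auto; lia.
  - intros H. apply Nat.max_lub; auto. apply IH; auto.
Qed.

Lemma level_le m K : (level m <= K)%nat <-> levels_bounded K m.
Proof.
  unfold level, levels_bounded. split.
  - intros H v [Hv|Hv]; [apply (list_level_le (fst m)) | apply (list_level_le (snd m))]; auto; lia.
  - intros H. apply Nat.max_lub; apply list_level_le; auto.
Qed.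

Lemma levels_bounded_level m : levels_bounded (level m) m.
Proof. apply level_le; auto. Qed.

Lemma levels_bounded_mono K K' m : levels_bounded K m -> (K <= K')%nat -> levels_bounded K' m.
Proof. intros H HK v Hv; specialize (H v Hv); lia. Qed.

Definition theta_var (i s : nat) : var := (i, S (S s)).
Definition u_var (i s : nat) : var := (i, S s).

Definition d_trunc (i K : nat) (x : elA) : elA := fun m p => sumR K (fun s => theta_du (theta_var i s) (u_var i s) x m p).
Definition h_trunc (i K : nat) (x : elA) : elA := fun m p => sumR K (fun s => u_dtheta (u_var i s) (theta_var i s) x m p).

(* d_i = sum_s theta_i^{s+2} d/du^{i,s+1}; the weight of m in the index i is its total degree in
   the variables u^{i,*} and theta_i^{>=2} on which d_i and h_i act, i.e. the eigenvalue of
   d_i h_i + h_i d_i on m. *)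
Definition weight (i : nat) (m : Mon) : nat :=
  (countp (fun v => Nat.eqb (fst v) i) (fst m) + countp (fun v => Nat.eqb (fst v) i && Nat.leb 2 (snd v)) (snd m))%nat.

Definition homotopy (i : nat) (x : elA) : elA := fun m p => / INR (weight i m) * h_trunc i (level m) x m p.

Lemma theta_du_congr v w y y' m p :
  (memb v (snd m) = true -> y (insE w (fst m), remove_all v (snd m)) p = y' (insE w (fst m), remove_all v (snd m)) p) ->
  theta_du v w y m p = theta_du v w y' m p.
Proof. unfold theta_du. destruct (memb v (snd m)); auto. intros H; rewrite H; auto. Qed.

Lemma u_dtheta_congr w v y y' m p :
  (memb w (fst m) = true -> memb v (snd m) = false ->
    y (remove_one w (fst m), insE v (snd m)) p = y' (remove_one w (fst m), insE v (snd m)) p) ->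
  u_dtheta w v y m p = u_dtheta w v y' m p.
Proof.
  unfold u_dtheta. destruct (memb w (fst m)), (memb v (snd m)); simpl; auto. intros H; rewrite H; auto.
Qed.

Lemma theta_du_sum v w K F m p :
  theta_du v w (fun m0 p0 => sumR K (fun t => F t m0 p0)) m p = sumR K (fun t => theta_du v w (F t) m p).
Proof.
  unfold theta_du. destruct (memb v (snd m)). rewrite <- sumR_scal; auto. symmetry; apply sumR_zero; auto.
Qed.

Lemma u_dtheta_sum w v K F m p :
  u_dtheta w v (fun m0 p0 => sumR K (fun t => F t m0 p0)) m p = sumR K (fun t => u_dtheta w v (F t) m p).
Proof.
  unfold u_dtheta. destruct (memb w (fst m) && negb (memb v (snd m))). rewrite <- sumR_scal; auto.
  symmetry; apply sumR_zero; auto.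
Qed.

Lemma theta_du_scal v w c y m p : theta_du v w (fun m0 p0 => c * y m0 p0) m p = c * theta_du v w y m p.
Proof. unfold theta_du. destruct (memb v (snd m)); ring. Qed.
Lemma sorted_mon_theta_du v w m : sorted_mon m -> sorted_mon (insE w (fst m), remove_all v (snd m)).
Proof. intros [H1 H2]; split; simpl. apply insE_sorted; auto. apply remove_all_strict; auto. Qed.
Lemma sorted_mon_u_dtheta w v m : sorted_mon m -> memb v (snd m) = false -> sorted_mon (remove_one w (fst m), insE v (snd m)).
Proof. intros [H1 H2] H; split; simpl. apply remove_one_sorted; auto. apply insE_strict; auto. apply memb_false; auto. Qed.

Lemma levels_bounded_theta_du v w m K : levels_bounded K m -> memb v (snd m) = true -> (snd w <= snd v)%nat ->
  levels_bounded K (insE w (fst m), remove_all v (snd m)).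
Proof.
  intros H Hv Hw u [Hu|Hu]; simpl in Hu.
  - apply In_insE in Hu. destruct Hu as [->|Hu]; [|apply H; auto].
    apply memb_true in Hv. specialize (H v (or_intror Hv)). lia.
  - apply In_remove_all in Hu. apply H; tauto.
Qed.

Lemma levels_bounded_u_dtheta w v m K : levels_bounded K m -> memb w (fst m) = true -> (snd v <= S (snd w))%nat ->
  levels_bounded (S K) (remove_one w (fst m), insE v (snd m)).
Proof.
  intros H Hw Hv u [Hu|Hu]; simpl in Hu.
  - apply In_remove_one in Hu. specialize (H u (or_introl Hu)); lia.
  - apply In_insE in Hu. destruct Hu as [->|Hu].
    + apply memb_true in Hw. specialize (H w (or_introl Hw)). lia.
    + specialize (H u (or_intror Hu)); lia.
Qed.

Lemma u_dtheta_absent w v x m p : ~ In w (fst m) -> u_dtheta w v x m p = 0.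
Proof. intros H. unfold u_dtheta. apply memb_false in H. rewrite H; auto. Qed.

Lemma h_trunc_stable i K K' x m p : levels_bounded K m -> (K <= K')%nat -> h_trunc i K' x m p = h_trunc i K x m p.
Proof.
  intros H HK. unfold h_trunc. apply sumR_trunc; auto. intros s Hs. apply u_dtheta_absent.
  intros Hin. specialize (H _ (or_introl Hin)). unfold u_var in H; simpl in H. lia.
Qed.

Lemma remove_all_notin v l : ~ In v l -> remove_all v l = l.
Proof.
  induction l as [|a l IH]; simpl; auto. intros H. unfold remove_all; simpl.
  destruct (var_eqb v a) eqn:E. apply var_eqb_eq in E; subst; tauto.
  simpl. f_equal. apply IH; tauto.
Qed.

Lemma nth_nbelow O j d : sortedb pltb O = true -> (j < length O)%nat -> nbelow (nth j O d) O = j.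
Proof.
  revert j; induction O as [|a O IH]; intros j H Hj; simpl in Hj; [lia|].
  apply sortedb_pltb_cons in H; destruct H as [H1 H2]. unfold nbelow; cbn [countp].
  destruct j as [|j].
  - simpl. rewrite pltb_irrefl. simpl. apply countp_zero. rewrite Forall_forall in *.
    intros x Hx. apply pltb_asym; auto.
  - simpl. assert (Hin : In (nth j O d) O) by (apply nth_In; lia).
    rewrite Forall_forall in H2. rewrite (H2 _ Hin). fold (nbelow (nth j O d) O). rewrite IH; auto; lia.
Qed.

Lemma remove_nth_remove_all O j d : sortedb pltb O = true -> (j < length O)%nat -> remove_nth j O = remove_all (nth j O d) O.
Proof.
  revert j; induction O as [|a O IH]; intros j H Hj; simpl in Hj; [lia|].
  apply sortedb_pltb_cons in H; destruct H as [H1 H2]. rewrite Forall_forall in H2.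
  destruct j as [|j].
  - simpl. unfold remove_all; simpl. rewrite var_eqb_refl. simpl. fold (remove_all a O). rewrite remove_all_notin; auto.
    intros Hin; specialize (H2 a Hin); rewrite pltb_irrefl in H2; discriminate.
  - simpl. assert (Hin : In (nth j O d) O) by (apply nth_In; lia).
    unfold remove_all; simpl. destruct (var_eqb (nth j O d) a) eqn:E.
    + apply var_eqb_eq in E. rewrite <- E in H2. specialize (H2 _ Hin). rewrite pltb_irrefl in H2; discriminate.
    + simpl. f_equal. fold (remove_all (nth j O d) O). apply IH; auto; lia.
Qed.

Definition lsum (F : var -> R) (l : list var) : R := fold_right (fun v a => F v + a) 0 l.

Lemma sumR_nth_lsum F l d : sumR (length l) (fun j => F (nth j l d)) = lsum F l.
Proof.
  induction l as [|a l IH]; simpl; auto. rewrite <- IH.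
  change (sumR (S (length l)) (fun j => F (nth j (a :: l) d)) = F a + sumR (length l) (fun j => F (nth j l d))).
  rewrite sumR_shift. auto.
Qed.

Lemma lsum_cons F a l : lsum F (a :: l) = F a + lsum F l.
Proof. reflexivity. Qed.

Lemma lsum_d_trunc i K H O : sortedb pltb O = true -> (forall v, In v O -> (snd v <= S K)%nat) ->
  lsum (fun v => if Nat.eqb (fst v) i && Nat.leb 2 (snd v) then H v else 0) O =
  sumR K (fun s => if memb (theta_var i s) O then H (theta_var i s) else 0).
Proof.
  induction O as [|a O IH]; intros HS HB.
  - simpl. symmetry; apply sumR_zero; intros; unfold memb; simpl; auto.
  - apply sortedb_pltb_cons in HS; destruct HS as [HS HF].
    assert (anot : ~ In a O).
    { intros Hin. rewrite Forall_forall in HF. specialize (HF a Hin). rewrite pltb_irrefl in HF; discriminate. }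
    rewrite lsum_cons, IH; auto.
    2: intros v Hv; apply HB; simpl; auto.
    transitivity (sumR K (fun s => (if var_eqb (theta_var i s) a then H (theta_var i s) else 0) + (if memb (theta_var i s) O then H (theta_var i s) else 0))).
    + rewrite sumR_plus. f_equal.
      destruct (Nat.eqb (fst a) i && Nat.leb 2 (snd a)) eqn:Ea.
      * apply andb_true_iff in Ea; destruct Ea as [Ea1 Ea2]. apply Nat.eqb_eq in Ea1; apply Nat.leb_le in Ea2.
        transitivity (sumR K (fun s => if Nat.eqb s (snd a - 2) then H (theta_var i s) else 0)).
        -- rewrite sumR_delta. assert (Hlt : (snd a - 2 < K)%nat) by (specialize (HB a (or_introl eq_refl)); lia).
           apply Nat.ltb_lt in Hlt. rewrite Hlt. f_equal. destruct a as [a1 a2]; unfold theta_var; simpl in *.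
           f_equal; lia.
        -- apply sumR_ext. intros s _. destruct (Nat.eqb s (snd a - 2)) eqn:E1; destruct (var_eqb (theta_var i s) a) eqn:E2; auto.
           ++ apply var_eqb_neq in E2. apply Nat.eqb_eq in E1. exfalso; apply E2. destruct a as [a1 a2]; unfold theta_var; simpl in *.
              f_equal; lia.
           ++ apply var_eqb_eq in E2. apply Nat.eqb_neq in E1. exfalso; apply E1. rewrite <- E2; unfold theta_var; simpl; lia.
      * symmetry; apply sumR_zero. intros s _. destruct (var_eqb (theta_var i s) a) eqn:E2; auto.
        apply var_eqb_eq in E2. rewrite <- E2 in Ea. unfold theta_var in Ea; simpl in Ea. rewrite Nat.eqb_refl in Ea. discriminate.
    + apply sumR_ext. intros s _. unfold memb at 2. rewrite cnt_countp. cbn [countp]. rewrite <- cnt_countp.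
      destruct (var_eqb (theta_var i s) a) eqn:E2.
      * apply var_eqb_eq in E2. rewrite E2. assert (memb a O = false) by (apply memb_false; auto). rewrite H0.
        simpl. ring.
      * simpl. unfold memb. ring.
Qed.

(* In a sorted list of odd variables the position of theta is the number of odd variables below
   it, so the sign (-1)^j in the definition of dop is the Koszul sign used by theta_du. *)
Lemma dop_d_trunc i K x m p : sorted_mon m -> levels_bounded (S K) m -> dop i x m p = d_trunc i K x m p.
Proof.
  intros [HE HO] HB. destruct m as [E O]. unfold dop, d_trunc. cbn [fst snd] in *.
  set (H := fun v => sgn (nbelow v O) * INR (cnt (i, (snd v - 1)%nat) E + 1) * x (insE (i, (snd v - 1)%nat) E, remove_all v O) p).
  transitivity (sumR (length O) (fun j => (fun v => if Nat.eqb (fst v) i && Nat.leb 2 (snd v) then H v else 0) (nth j O (0%nat,0%nat)))).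
  - apply sumR_ext. intros j Hj. cbv beta. match goal with |- (if ?c then _ else _) = _ => destruct c end; auto.
    unfold H. rewrite nth_nbelow, (remove_nth_remove_all O j (0%nat,0%nat)); auto.
  - transitivity (lsum (fun v => if Nat.eqb (fst v) i && Nat.leb 2 (snd v) then H v else 0) O).
    { exact (sumR_nth_lsum (fun v => if Nat.eqb (fst v) i && Nat.leb 2 (snd v) then H v else 0) O (0%nat,0%nat)). }
    rewrite (lsum_d_trunc i K); auto.
Qed.

Lemma theta_var_inj i s j t : theta_var i s = theta_var j t -> i = j /\ s = t.
Proof. unfold theta_var; intros H; inversion H; auto. Qed.
Lemma u_var_inj i s j t : u_var i s = u_var j t -> i = j /\ s = t.
Proof. unfold u_var; intros H; inversion H; auto. Qed.

Lemma theta_du_step i s m K : sorted_mon m -> levels_bounded K m -> memb (theta_var i s) (snd m) = true ->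
  sorted_mon (insE (u_var i s) (fst m), remove_all (theta_var i s) (snd m)) /\ levels_bounded K (insE (u_var i s) (fst m), remove_all (theta_var i s) (snd m)).
Proof. intros H1 H2 H3. split. apply sorted_mon_theta_du; auto. apply levels_bounded_theta_du; auto. unfold theta_var, u_var; simpl; lia. Qed.

Lemma u_dtheta_step i s m K : sorted_mon m -> levels_bounded K m -> memb (u_var i s) (fst m) = true -> memb (theta_var i s) (snd m) = false ->
  sorted_mon (remove_one (u_var i s) (fst m), insE (theta_var i s) (snd m)) /\ levels_bounded (S K) (remove_one (u_var i s) (fst m), insE (theta_var i s) (snd m)).
Proof. intros H1 H2 H3 H4. split. apply sorted_mon_u_dtheta; auto. apply levels_bounded_u_dtheta; auto. Qed.

Lemma dop_dop i x m p : sorted_mon m -> dop i (dop i x) m p = 0.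
Proof.
  intros Hw. set (K := level m).
  assert (HB : levels_bounded (S K) m) by (apply (levels_bounded_mono K); [apply levels_bounded_level|lia]).
  rewrite (dop_d_trunc i K) by auto. unfold d_trunc.
  transitivity (sumR K (fun s => sumR K (fun t => theta_du (theta_var i s) (u_var i s) (theta_du (theta_var i t) (u_var i t) x) m p))).
  - apply sumR_ext. intros s _. rewrite <- theta_du_sum. apply theta_du_congr. intros Hin.
    destruct (theta_du_step i s m (S K) Hw HB Hin) as [W1 W2].
    rewrite (dop_d_trunc i K) by auto. reflexivity.
  - apply sumR_antisym. intros s t. destruct (Nat.eq_dec s t) as [->|Hne].
    + rewrite !theta_du_twice. ring.
    + apply theta_du_anticomm; auto. intros E; apply theta_var_inj in E; lia.
Qed.

Lemma weight_theta_du i j s m : sorted_mon m -> memb (theta_var j s) (snd m) = true ->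
  weight i (insE (u_var j s) (fst m), remove_all (theta_var j s) (snd m)) = weight i m.
Proof.
  intros [_ HO] Hin. unfold weight; cbn [fst snd]. rewrite countp_insE, countp_remove_all.
  rewrite (countp_split (fun v => Nat.eqb (fst v) i && Nat.leb 2 (snd v)) (theta_var j s) (snd m)).
  rewrite (cnt_strict_memb _ _ HO Hin). unfold theta_var, u_var; simpl. destruct (Nat.eqb j i); simpl; lia.
Qed.

Lemma weight_u_dtheta i j s m : memb (u_var j s) (fst m) = true -> memb (theta_var j s) (snd m) = false ->
  weight i (remove_one (u_var j s) (fst m), insE (theta_var j s) (snd m)) = weight i m.
Proof.
  intros Hin Hn. apply memb_true in Hin. unfold weight; cbn [fst snd]. rewrite countp_insE, countp_remove_one by auto.
  assert (countp (fun v => Nat.eqb (fst v) i) (fst m) >= (if Nat.eqb (fst (u_var j s)) i then 1 else 0))%nat.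
  { destruct (Nat.eqb (fst (u_var j s)) i) eqn:E; [|lia].
    assert (0 < countp (fun v => Nat.eqb (fst v) i) (fst m))%nat; [apply countp_pos; eauto|lia]. }
  unfold theta_var, u_var in *; simpl in *. destruct (Nat.eqb j i); simpl in *; lia.
Qed.

Lemma dop_homotopy_expand i j x m p : sorted_mon m ->
  dop j (homotopy i x) m p + homotopy i (dop j x) m p =
  / INR (weight i m) * sumR (S (S (level m))) (fun s => sumR (S (S (level m))) (fun t =>
     theta_du (theta_var j s) (u_var j s) (u_dtheta (u_var i t) (theta_var i t) x) m p + u_dtheta (u_var i t) (theta_var i t) (theta_du (theta_var j s) (u_var j s) x) m p)).
Proof.
  intros Hw. set (K := S (S (level m))).
  assert (HB : levels_bounded (S K) m) by (apply (levels_bounded_mono (level m)); [apply levels_bounded_level|unfold K; lia]).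
  assert (HB0 : levels_bounded (level m) m) by apply levels_bounded_level.
  rewrite (dop_d_trunc j K) by auto. unfold d_trunc.
  assert (E1 : forall s, theta_du (theta_var j s) (u_var j s) (homotopy i x) m p =
     / INR (weight i m) * sumR K (fun t => theta_du (theta_var j s) (u_var j s) (u_dtheta (u_var i t) (theta_var i t) x) m p)).
  { intros s. rewrite <- theta_du_sum, <- theta_du_scal. apply theta_du_congr. intros Hin.
    destruct (theta_du_step j s m (level m) Hw HB0 Hin) as [W1 W2].
    unfold homotopy. rewrite weight_theta_du by auto. f_equal. symmetry. apply h_trunc_stable.
    apply levels_bounded_level. apply level_le. apply (levels_bounded_mono (level m)); auto; unfold K; lia. }
  rewrite (sumR_ext _ _ _ (fun s _ => E1 s)). rewrite <- sumR_scal.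
  unfold homotopy at 1. rewrite <- (h_trunc_stable i (level m) K) by (auto; unfold K; lia).
  unfold h_trunc.
  assert (E2 : forall t, u_dtheta (u_var i t) (theta_var i t) (dop j x) m p =
     sumR K (fun s => u_dtheta (u_var i t) (theta_var i t) (theta_du (theta_var j s) (u_var j s) x) m p)).
  { intros t. rewrite <- u_dtheta_sum. apply u_dtheta_congr. intros Hin Hn.
    destruct (u_dtheta_step i t m (level m) Hw HB0 Hin Hn) as [W1 W2].
    rewrite (dop_d_trunc j K); auto. apply (levels_bounded_mono (S (level m))); auto; unfold K; lia. }
  rewrite (sumR_ext _ _ _ (fun t _ => E2 t)).
  rewrite (sumR_swap K K (fun t s => u_dtheta (u_var i t) (theta_var i t) (theta_du (theta_var j s) (u_var j s) x) m p)).
  rewrite <- Rmult_plus_distr_l. f_equal. rewrite <- sumR_plus. apply sumR_ext. intros s _.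
  rewrite <- sumR_plus. auto.
Qed.

Lemma dop_homotopy_anticomm i j x m p : sorted_mon m -> i <> j -> dop j (homotopy i x) m p + homotopy i (dop j x) m p = 0.
Proof.
  intros Hw Hne. rewrite dop_homotopy_expand by auto. rewrite sumR_zero; [ring|]. intros s _.
  apply sumR_zero. intros t _. apply theta_du_u_dtheta_anticomm; auto.
  - intros E; apply theta_var_inj in E; lia.
  - intros E; apply u_var_inj in E; lia.
Qed.

Lemma sumR_u_var_indicator i K a : (1 <= snd a <= K)%nat ->
  sumR K (fun s => if var_eqb (u_var i s) a then 1 else 0) = if Nat.eqb (fst a) i then 1 else 0.
Proof.
  intros Ha. destruct (Nat.eqb (fst a) i) eqn:Ea.
  - apply Nat.eqb_eq in Ea.
    transitivity (sumR K (fun s => if Nat.eqb s (snd a - 1) then 1 else 0)).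
    + apply sumR_ext. intros s _. destruct (var_eqb (u_var i s) a) eqn:E1, (Nat.eqb s (snd a - 1)) eqn:E2; auto.
      * apply var_eqb_eq in E1. apply Nat.eqb_neq in E2. rewrite <- E1 in E2. unfold u_var in E2; simpl in E2; lia.
      * apply var_eqb_neq in E1. apply Nat.eqb_eq in E2. exfalso; apply E1. destruct a; unfold u_var; simpl in *; f_equal; lia.
    + rewrite sumR_delta. replace (Nat.ltb (snd a - 1) K) with true; auto. symmetry; apply Nat.ltb_lt; lia.
  - apply sumR_zero. intros s _. destruct (var_eqb (u_var i s) a) eqn:E1; auto.
    apply var_eqb_eq in E1. rewrite <- E1 in Ea. unfold u_var in Ea; simpl in Ea. rewrite Nat.eqb_refl in Ea; discriminate.
Qed.

Lemma sumR_cnt_u_var i K E : (forall v, In v E -> (1 <= snd v <= K)%nat) ->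
  sumR K (fun s => INR (cnt (u_var i s) E)) = INR (countp (fun v => Nat.eqb (fst v) i) E).
Proof.
  induction E as [|a E IH]; intros H.
  - apply sumR_zero. intros; simpl; auto.
  - transitivity (sumR K (fun s => (if var_eqb (u_var i s) a then 1 else 0) + INR (cnt (u_var i s) E))).
    + apply sumR_ext. intros s _. rewrite !cnt_countp. cbn [countp]. rewrite plus_INR.
      destruct (var_eqb (u_var i s) a); simpl; ring.
    + rewrite sumR_plus, IH, sumR_u_var_indicator by (intros; apply H; simpl; auto).
      cbn [countp]. rewrite plus_INR. destruct (Nat.eqb (fst a) i); simpl; ring.
Qed.

Lemma lsum_indicator (P : var -> bool) (l : list var) : lsum (fun v => if P v then 1 else 0) l = INR (countp P l).
Proof.
  induction l as [|a l IH]; [simpl; auto|]. rewrite lsum_cons, IH. cbn [countp]. rewrite plus_INR. destruct (P a); simpl; ring.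
Qed.

Lemma sumR_memb_theta_var i K O : sortedb pltb O = true -> (forall v, In v O -> (snd v <= S K)%nat) ->
  sumR K (fun s => if memb (theta_var i s) O then 1 else 0) = INR (countp (fun v => Nat.eqb (fst v) i && Nat.leb 2 (snd v)) O).
Proof.
  intros H1 H2. rewrite <- lsum_indicator. rewrite (lsum_d_trunc i K (fun _ => 1)); auto.
Qed.

Lemma dop_homotopy_diag n i x m p : validM n m -> weight i m <> 0%nat -> dop i (homotopy i x) m p + homotopy i (dop i x) m p = x m p.
Proof.
  intros Hv HN. assert (Hw : sorted_mon m) by (destruct Hv as [A [B _]]; split; auto).
  rewrite dop_homotopy_expand by auto. set (K := S (S (level m))).
  rewrite sumR_diag.
  2: { intros s t Hst. apply theta_du_u_dtheta_anticomm; auto.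
       - intros E; apply theta_var_inj in E; lia.
       - intros E; apply u_var_inj in E; lia. }
  rewrite (sumR_ext _ _ (fun s => (INR (cnt (u_var i s) (fst m)) + (if memb (theta_var i s) (snd m) then 1 else 0)) * x m p)).
  2: { intros s _. apply theta_du_u_dtheta_number; auto. }
  transitivity (/ INR (weight i m) * (sumR K (fun s => INR (cnt (u_var i s) (fst m))) + sumR K (fun s => if memb (theta_var i s) (snd m) then 1 else 0)) * x m p).
  - rewrite <- sumR_plus. rewrite Rmult_assoc. f_equal. rewrite Rmult_comm, sumR_scal.
    apply sumR_ext; intros; ring.
  - rewrite sumR_cnt_u_var, sumR_memb_theta_var.
    + unfold weight. rewrite <- plus_INR. fold (weight i m). field. apply not_0_INR; auto.
    + destruct Hw; auto.
    + intros v Hin. pose proof (levels_bounded_level m v (or_intror Hin)). unfold K; lia.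
    + intros v Hin. destruct Hv as [_ [_ [HE _]]]. rewrite Forall_forall in HE. specialize (HE v Hin).
      pose proof (levels_bounded_level m v (or_introl Hin)). unfold K; lia.
Qed.

(** * Smooth functions *)

Section Cont.
Variable n : nat.

Lemma cont_const c x : cont_at n (fun _ => c) x.
Proof. intros eps He. exists 1; split; [lra|]. intros. unfold Rminus; rewrite Rplus_opp_r, Rabs_R0; auto. Qed.

Lemma cont_add f g x : cont_at n f x -> cont_at n g x -> cont_at n (fun y => f y + g y) x.
Proof.
  intros Hf Hg eps He.
  destruct (Hf (eps/2)) as [d1 [Hd1 H1]]; [lra|].
  destruct (Hg (eps/2)) as [d2 [Hd2 H2]]; [lra|].
  exists (Rmin d1 d2); split; [apply Rmin_pos; auto|].
  intros y Hy Hk.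
  assert (A1 := H1 y Hy (fun k Hk' => Rlt_le_trans _ _ _ (Hk k Hk') (Rmin_l _ _))).
  assert (A2 := H2 y Hy (fun k Hk' => Rlt_le_trans _ _ _ (Hk k Hk') (Rmin_r _ _))).
  replace (f y + g y - (f x + g x)) with ((f y - f x) + (g y - g x)) by ring.
  eapply Rle_lt_trans; [apply Rabs_triang|]. lra.
Qed.

Lemma cont_mul f g x : cont_at n f x -> cont_at n g x -> cont_at n (fun y => f y * g y) x.
Proof.
  intros Hf Hg eps He.
  set (a := Rabs (f x)). set (b := Rabs (g x)).
  assert (Ha : 0 <= a) by apply Rabs_pos. assert (Hb : 0 <= b) by apply Rabs_pos.
  destruct (Hf (Rmin 1 (eps / (2 * (b + 1))))) as [d1 [Hd1 H1]].
  { apply Rmin_pos; [lra|]. apply Rdiv_lt_0_compat; lra. }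
  destruct (Hg (Rmin 1 (eps / (2 * (a + 1))))) as [d2 [Hd2 H2]].
  { apply Rmin_pos; [lra|]. apply Rdiv_lt_0_compat; lra. }
  exists (Rmin d1 d2); split; [apply Rmin_pos; auto|].
  intros y Hy Hk.
  assert (A1 := H1 y Hy (fun k Hk' => Rlt_le_trans _ _ _ (Hk k Hk') (Rmin_l _ _))).
  assert (A2 := H2 y Hy (fun k Hk' => Rlt_le_trans _ _ _ (Hk k Hk') (Rmin_r _ _))).
  assert (A1a : Rabs (f y - f x) < eps / (2 * (b + 1))) by (eapply Rlt_le_trans; [exact A1|apply Rmin_r]).
  assert (A2a : Rabs (g y - g x) < eps / (2 * (a + 1))) by (eapply Rlt_le_trans; [exact A2|apply Rmin_r]).
  assert (A2b : Rabs (g y - g x) < 1) by (eapply Rlt_le_trans; [exact A2|apply Rmin_l]).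
  assert (Gy : Rabs (g y) <= b + 1).
  { replace (g y) with ((g y - g x) + g x) by ring. eapply Rle_trans; [apply Rabs_triang|]. unfold b; lra. }
  replace (f y * g y - f x * g x) with ((f y - f x) * g y + f x * (g y - g x)) by ring.
  eapply Rle_lt_trans; [apply Rabs_triang|]. rewrite !Rabs_mult.
  assert (T1 : Rabs (f y - f x) * Rabs (g y) <= eps / (2 * (b + 1)) * (b + 1)).
  { apply Rmult_le_compat; try apply Rabs_pos; lra. }
  assert (T2 : Rabs (f x) * Rabs (g y - g x) <= a * (eps / (2 * (a + 1)))).
  { apply Rmult_le_compat_l; [apply Rabs_pos|lra]. }
  assert (E1 : eps / (2 * (b + 1)) * (b + 1) = eps / 2) by (field; lra).
  assert (E2 : a * (eps / (2 * (a + 1))) < eps / 2).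
  { apply (Rmult_lt_reg_r (2 * (a + 1))); [lra|].
    replace (a * (eps / (2 * (a + 1))) * (2 * (a + 1))) with (a * eps) by (field; lra). nra. }
  lra.
Qed.

Lemma cont_inv g x : cont_at n g x -> g x <> 0 -> cont_at n (fun y => / g y) x.
Proof.
  intros Hg Hx eps He.
  set (b := Rabs (g x)). assert (Hb : 0 < b) by (apply Rabs_pos_lt; auto).
  destruct (Hg (Rmin (b / 2) (eps * b * b / 2))) as [d [Hd H]].
  { apply Rmin_pos; [lra|]. apply Rdiv_lt_0_compat; [|lra]. apply Rmult_lt_0_compat; [|lra]. nra. }
  exists d; split; auto. intros y Hy Hk. specialize (H y Hy Hk).
  assert (A1 : Rabs (g y - g x) < b / 2) by (eapply Rlt_le_trans; [exact H|apply Rmin_l]).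
  assert (A2 : Rabs (g y - g x) < eps * b * b / 2) by (eapply Rlt_le_trans; [exact H|apply Rmin_r]).
  assert (Gy : b / 2 < Rabs (g y)).
  { assert (Rabs (g x) <= Rabs (g x - g y) + Rabs (g y)).
    { replace (g x) with ((g x - g y) + g y) at 1 by ring. apply Rabs_triang. }
    rewrite Rabs_minus_sym in H0. fold b in H0. lra. }
  assert (gy0 : g y <> 0). { intros Z. rewrite Z, Rabs_R0 in Gy. lra. }
  replace (/ g y - / g x) with ((g x - g y) / (g y * g x)) by (field; auto).
  unfold Rdiv. rewrite Rabs_mult, Rabs_inv, Rabs_mult. rewrite Rabs_minus_sym. fold b.
  apply (Rmult_lt_reg_r (Rabs (g y) * b)); [nra|].
  rewrite Rmult_assoc, Rinv_l by nra. rewrite Rmult_1_r.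
  apply Rlt_le_trans with (eps * b * b / 2); auto.
  assert (0 < eps * b * (Rabs (g y) - b / 2)) by (apply Rmult_lt_0_compat; [apply Rmult_lt_0_compat|]; lra). lra.
Qed.

End Cont.

Lemma upd_same (x : point) k : upd x k (x k) = x.
Proof. apply functional_extensionality. intros j. unfold upd. destruct (Nat.eqb j k) eqn:E; auto.
  apply Nat.eqb_eq in E; subst; auto. Qed.

(* smooth_on asks for one family containing all iterated partial derivatives, so closure under
   ring operations is proved symbolically: expressions built from such families (SFun j ds is the
   partial derivative ds of the j-th function), inverses of nonvanishing ones (SInv), constants,
   sums and products are closed under d/dx_k. *)
Inductive sexpr : Type :=
| SFun : nat -> list nat -> sexpr
| SInv : nat -> sexpr
| SConst : R -> sexpr
| SAdd : sexpr -> sexpr -> sexpr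
| SMul : sexpr -> sexpr -> sexpr.

Section Expressions.
Variable n : nat.
Variable U : point -> Prop.
Variable Ds : nat -> list nat -> point -> R.
Variable nz : nat -> Prop.
Hypothesis Dcont : forall j ds x, U x -> cont_at n (Ds j ds) x.
Hypothesis Dder : forall j ds k x, (k < n)%nat -> U x ->
  derivable_pt_lim (fun t => Ds j ds (upd x k t)) (x k) (Ds j (k :: ds) x).
Hypothesis Dnz : forall j x, nz j -> U x -> Ds j [] x <> 0.

Fixpoint seval (e : sexpr) (x : point) : R :=
  match e with
  | SFun j ds => Ds j ds x
  | SInv j => / Ds j [] x
  | SConst c => c
  | SAdd a b => seval a x + seval b x
  | SMul a b => seval a x * seval b x
  end.

Fixpoint sderiv (k : nat) (e : sexpr) : sexpr :=
  match e with
  | SFun j ds => SFun j (k :: ds)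
  | SInv j => SMul (SConst (-1)) (SMul (SMul (SInv j) (SInv j)) (SFun j [k]))
  | SConst c => SConst 0
  | SAdd a b => SAdd (sderiv k a) (sderiv k b)
  | SMul a b => SAdd (SMul (sderiv k a) b) (SMul a (sderiv k b))
  end.

Fixpoint sexpr_ok (e : sexpr) : Prop :=
  match e with
  | SInv j => nz j
  | SAdd a b | SMul a b => sexpr_ok a /\ sexpr_ok b
  | _ => True
  end.

Lemma sderiv_ok k e : sexpr_ok e -> sexpr_ok (sderiv k e).
Proof. induction e; simpl; tauto. Qed.

Lemma seval_cont e x : sexpr_ok e -> U x -> cont_at n (seval e) x.
Proof.
  induction e; simpl; intros Ho Hx.
  - apply Dcont; auto.
  - apply cont_inv; auto.
  - apply cont_const.
  - apply cont_add; tauto.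
  - apply cont_mul; tauto.
Qed.

Lemma seval_sderiv e k x : sexpr_ok e -> (k < n)%nat -> U x ->
  derivable_pt_lim (fun t => seval e (upd x k t)) (x k) (seval (sderiv k e) x).
Proof.
  induction e; simpl; intros Ho Hk Hx.
  - apply Dder; auto.
  - assert (H := Dder n0 [] k x Hk Hx).
    assert (Hnz : Ds n0 [] (upd x k (x k)) <> 0) by (rewrite upd_same; apply Dnz; auto).
    assert (H2 := derivable_pt_lim_div (fun _ => 1) (fun t => Ds n0 [] (upd x k t)) (x k) _ _
                   (derivable_pt_lim_const 1 (x k)) H Hnz).
    assert (Hf : (fun t => / Ds n0 [] (upd x k t)) = ((fun _ : R => 1) / (fun t => Ds n0 [] (upd x k t)))%F).
    { apply functional_extensionality; intros t; unfold div_fct, Rdiv; ring. }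
    rewrite Hf. cbv beta in H2. rewrite upd_same in H2.
    replace (-1 * (/ Ds n0 [] x * / Ds n0 [] x * Ds n0 [k] x)) with
      ((0 * Ds n0 [] x - Ds n0 [k] x * 1) / (Ds n0 [] x)²); [exact H2|]. unfold Rsqr. field. apply Dnz; auto.
  - apply derivable_pt_lim_const.
  - apply (derivable_pt_lim_plus (fun t => seval e1 (upd x k t)) (fun t => seval e2 (upd x k t))); tauto.
  - assert (H := derivable_pt_lim_mult (fun t => seval e1 (upd x k t)) (fun t => seval e2 (upd x k t)) (x k) _ _
      (IHe1 (proj1 Ho) Hk Hx) (IHe2 (proj2 Ho) Hk Hx)).
    unfold mult_fct in H. rewrite upd_same in H. exact H.
Qed.

Fixpoint sderivs (ds : list nat) (e : sexpr) : sexpr :=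
  match ds with [] => e | k :: ds' => sderiv k (sderivs ds' e) end.

Lemma sderivs_ok ds e : sexpr_ok e -> sexpr_ok (sderivs ds e).
Proof. induction ds; simpl; auto. intros; apply sderiv_ok; auto. Qed.

Lemma sexpr_smooth e g : sexpr_ok e -> (forall x, U x -> seval e x = g x) -> smooth_on n U g.
Proof.
  intros Ho Hg. exists (fun ds => seval (sderivs ds e)). split; [|split].
  - simpl; auto.
  - intros ds x Hx. apply seval_cont; auto. apply sderivs_ok; auto.
  - intros ds k x Hk Hx. simpl. apply seval_sderiv; auto. apply sderivs_ok; auto.
Qed.
End Expressions.

Section Smooth.
Variable n : nat.
Variable U : point -> Prop.

Definition pack2 (D1 D2 : list nat -> point -> R) : nat -> list nat -> point -> R :=
  fun j => match j with O => D1 | _ => D2 end.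

Lemma smooth_ext g h : (forall x, U x -> g x = h x) -> smooth_on n U g -> smooth_on n U h.
Proof.
  intros H [D [H1 [H2 H3]]]. exists D; split; [|split]; auto. intros x Hx; rewrite H1, H; auto.
Qed.

Lemma smooth_binop (op : sexpr -> sexpr -> sexpr) g h F :
  (sexpr_ok (fun _ => False) (op (SFun 0 []) (SFun 1 []))) ->
  (forall (Ds : nat -> list nat -> point -> R) x, seval Ds (op (SFun 0 []) (SFun 1 [])) x = F (Ds 0%nat [] x) (Ds 1%nat [] x)) ->
  smooth_on n U g -> smooth_on n U h -> smooth_on n U (fun x => F (g x) (h x)).
Proof.
  intros Hok Hev [D1 [A1 [B1 C1]]] [D2 [A2 [B2 C2]]].
  apply (sexpr_smooth n U (pack2 D1 D2) (fun _ => False)) with (e := op (SFun 0 []) (SFun 1 [])).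
  - intros [|j] ds x Hx; simpl; auto.
  - intros [|j] ds k x Hk Hx; simpl; auto.
  - intros j x [].
  - apply Hok.
  - intros x Hx. rewrite Hev. simpl. rewrite A1, A2; auto.
Qed.

Lemma smooth_add g h : smooth_on n U g -> smooth_on n U h -> smooth_on n U (fun x => g x + h x).
Proof.
  apply (smooth_binop SAdd g h (fun a b => a + b)); simpl; auto.
Qed.

Lemma smooth_mul g h : smooth_on n U g -> smooth_on n U h -> smooth_on n U (fun x => g x * h x).
Proof.
  apply (smooth_binop SMul g h (fun a b => a * b)); simpl; auto.
Qed.

Lemma smooth_const c : smooth_on n U (fun _ => c).
Proof.
  apply (sexpr_smooth n U (fun _ _ _ => 0) (fun _ => False)) with (e := SConst c); simpl; auto.
  - intros. apply cont_const.
  - intros. apply derivable_pt_lim_const.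
Qed.

Lemma smooth_inv g : smooth_on n U g -> (forall x, U x -> g x <> 0) -> smooth_on n U (fun x => / g x).
Proof.
  intros [D [A [B C]]] Hnz.
  apply (sexpr_smooth n U (fun _ => D) (fun j => True)) with (e := SInv 0); simpl; auto.
  - intros j x _ Hx. rewrite A; auto.
  - intros x Hx. rewrite A; auto.
Qed.

Lemma smooth_coord i : (i < n)%nat -> (forall x, U x -> inRn n x) -> smooth_on n U (fun x => x i).
Proof.
  intros Hi HU.
  exists (fun ds => match ds with [] => fun x => x i | [k] => fun _ => if Nat.eqb k i then 1 else 0 | _ => fun _ => 0 end).
  split; [|split].
  - auto.
  - intros [|k [|k' ds]] x Hx; try apply cont_const.
    all: try (intros eps He; exists eps; split; auto; intros y Hy Hk; apply Hk; auto).
  - intros [|k [|k' ds]] k0 x Hk Hx; try apply derivable_pt_lim_const.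
    unfold upd. destruct (Nat.eqb i k0) eqn:E.
    + apply Nat.eqb_eq in E; subst. rewrite Nat.eqb_refl. apply derivable_pt_lim_id.
    + rewrite Nat.eqb_sym, E. apply derivable_pt_lim_const.
Qed.

Lemma smooth_sumR k (F : nat -> point -> R) : (forall j, (j < k)%nat -> smooth_on n U (F j)) ->
  smooth_on n U (fun x => sumR k (fun j => F j x)).
Proof.
  induction k; intros H; simpl.
  - apply smooth_const.
  - apply (smooth_add (fun x => sumR k (fun j => F j x)) (F k)); auto.
Qed.

Lemma smooth_scal c g : smooth_on n U g -> smooth_on n U (fun x => c * g x).
Proof. intros H. apply (smooth_mul (fun _ => c) g); auto. apply smooth_const. Qed.

Lemma smooth_pow g k : smooth_on n U g -> smooth_on n U (fun x => g x ^ k).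
Proof.
  intros H. induction k; simpl. apply smooth_const. apply (smooth_mul g (fun x => g x ^ k)); auto.
Qed.
End Smooth.

(** * Localization at the active indices *)

Section Active.
Variable n : nat.

Lemma validM_sorted_mon m : validM n m -> sorted_mon m.
Proof. intros [A [B _]]; split; auto. Qed.

Lemma validM_theta_du j s m : validM n m -> memb (theta_var j s) (snd m) = true ->
  validM n (insE (u_var j s) (fst m), remove_all (theta_var j s) (snd m)).
Proof.
  intros [A [B [C D]]] H. apply memb_true in H.
  rewrite Forall_forall in D. assert (Hj := D _ H); unfold theta_var in Hj; simpl in Hj.
  split; [|split; [|split]]; simpl.
  - apply insE_sorted; auto.
  - apply remove_all_strict; auto.
  - apply Forall_forall. intros x Hx. apply In_insE in Hx. destruct Hx as [->|Hx].
    + unfold u_var; simpl; lia.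
    + rewrite Forall_forall in C; auto.
  - apply Forall_forall. intros x Hx. apply In_remove_all in Hx. apply D; tauto.
Qed.

Lemma validM_u_dtheta j s m : validM n m -> memb (u_var j s) (fst m) = true -> memb (theta_var j s) (snd m) = false ->
  validM n (remove_one (u_var j s) (fst m), insE (theta_var j s) (snd m)).
Proof.
  intros [A [B [C D]]] H H'. apply memb_true in H. apply memb_false in H'.
  rewrite Forall_forall in C. assert (Hj := C _ H); unfold u_var in Hj; simpl in Hj.
  split; [|split; [|split]]; simpl.
  - apply remove_one_sorted; auto.
  - apply insE_strict; auto.
  - apply Forall_forall. intros x Hx. apply In_remove_one in Hx. auto.
  - apply Forall_forall. intros x Hx. apply In_insE in Hx. destruct Hx as [->|Hx].
    + unfold theta_var; simpl; lia.
    + rewrite Forall_forall in D; auto.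
Qed.

Lemma dop_d_level i x m p : validM n m -> dop i x m p = d_trunc i (level m) x m p.
Proof.
  intros H. apply dop_d_trunc. apply validM_sorted_mon; auto. apply (levels_bounded_mono (level m)); [apply levels_bounded_level|lia].
Qed.

Lemma dop_congr i x x' m p : validM n m -> (forall m', validM n m' -> x m' p = x' m' p) ->
  dop i x m p = dop i x' m p.
Proof.
  intros Hv H. rewrite !dop_d_level by auto. unfold d_trunc. apply sumR_ext. intros s _.
  apply theta_du_congr. intros Hin. apply H. apply validM_theta_du; auto.
Qed.

Lemma homotopy_congr i x x' m p : validM n m -> (forall m', validM n m' -> x m' p = x' m' p) ->
  homotopy i x m p = homotopy i x' m p.
Proof.
  intros Hv H. unfold homotopy, h_trunc. f_equal. apply sumR_ext. intros s _.
  apply u_dtheta_congr. intros Hin Hn. apply H. apply validM_u_dtheta; auto.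
Qed.

Lemma weight_theta_du_valid i j s m : validM n m -> memb (theta_var j s) (snd m) = true ->
  weight i (insE (u_var j s) (fst m), remove_all (theta_var j s) (snd m)) = weight i m.
Proof. intros H1 H2. apply weight_theta_du; auto. apply validM_sorted_mon; auto. Qed.

Lemma dop_weight_local i x m p : validM n m ->
  (forall m', validM n m' -> (forall j, weight j m' = weight j m) -> x m' p = 0) -> dop i x m p = 0.
Proof.
  intros Hv H. rewrite dop_d_level by auto. unfold d_trunc. apply sumR_zero. intros s _.
  unfold theta_du. destruct (memb (theta_var i s) (snd m)) eqn:E; [|auto].
  rewrite H; [ring|apply validM_theta_du; auto|]. intros j; apply weight_theta_du_valid; auto.
Qed.

Lemma homotopy_weight_local i x m p : validM n m ->
  (forall m', validM n m' -> (forall j, weight j m' = weight j m) -> x m' p = 0) -> homotopy i x m p = 0.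
Proof.
  intros Hv H. unfold homotopy, h_trunc. rewrite sumR_zero; [ring|]. intros s _.
  unfold u_dtheta. destruct (memb (u_var i s) (fst m)) eqn:E1, (memb (theta_var i s) (snd m)) eqn:E2; simpl; auto.
  rewrite H; [ring|apply validM_u_dtheta; auto|]. intros j; apply weight_u_dtheta; auto.
Qed.

Lemma weight_pos_even j a m : In a (fst m) -> fst a = j -> (0 < weight j m)%nat.
Proof.
  intros H1 H2. unfold weight.
  assert (0 < countp (fun v => Nat.eqb (fst v) j) (fst m))%nat.
  2:{ eapply Nat.lt_le_trans; [eassumption|apply Nat.le_add_r]. }
  apply countp_pos. exists a; split; auto. apply Nat.eqb_eq; auto.
Qed.

Lemma weight_pos_odd j a m : In a (snd m) -> fst a = j -> (2 <= snd a)%nat -> (0 < weight j m)%nat.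
Proof.
  intros H1 H2 H3. unfold weight.
  assert (0 < countp (fun v => Nat.eqb (fst v) j && Nat.leb 2 (snd v)) (snd m))%nat.
  2:{ eapply Nat.lt_le_trans; [eassumption|apply Nat.le_add_l]. }
  apply countp_pos. exists a; split; auto. apply andb_true_iff; split; [apply Nat.eqb_eq|apply Nat.leb_le]; auto.
Qed.

Lemma dop_weight_zero j x m p : validM n m -> weight j m = 0%nat -> dop j x m p = 0.
Proof.
  intros Hv H. rewrite dop_d_level by auto. unfold d_trunc. apply sumR_zero. intros s _.
  unfold theta_du. destruct (memb (theta_var j s) (snd m)) eqn:E; [|auto].
  apply memb_true in E. pose proof (weight_pos_odd j _ m E eq_refl). unfold theta_var in H0; simpl in H0. lia.
Qed.

Lemma homotopy_weight_zero i x m p : weight i m = 0%nat -> homotopy i x m p = 0.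
Proof.
  intros H. unfold homotopy, h_trunc. rewrite sumR_zero; [ring|]. intros s _.
  unfold u_dtheta. destruct (memb (u_var i s) (fst m)) eqn:E; simpl; [|auto].
  apply memb_true in E. pose proof (weight_pos_even i _ m E eq_refl). lia.
Qed.

Lemma dop_supported_weight_zero j x m p : validM n m ->
  (forall m', validM n m' -> weight j m' <> 0%nat -> x m' p = 0) -> dop j x m p = 0.
Proof.
  intros Hv H. rewrite dop_d_level by auto. unfold d_trunc. apply sumR_zero. intros s _.
  unfold theta_du. destruct (memb (theta_var j s) (snd m)) eqn:E; [|auto].
  rewrite H; [ring|apply validM_theta_du; auto|].
  assert (0 < weight j (insE (u_var j s) (fst m), remove_all (theta_var j s) (snd m)))%nat; [|lia].
  apply (weight_pos_even j (u_var j s)); auto. simpl. apply In_insE; auto.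
Qed.

Lemma dop_plus i x x' m p : dop i (fun m0 p0 => x m0 p0 + x' m0 p0) m p = dop i x m p + dop i x' m p.
Proof.
  unfold dop. rewrite <- sumR_plus. apply sumR_ext. intros j _.
  match goal with |- (if ?c then _ else _) = _ => destruct c end; ring.
Qed.

Lemma dop_scal i (g : point -> R) x m p : dop i (fun m0 p0 => g p0 * x m0 p0) m p = g p * dop i x m p.
Proof.
  unfold dop. rewrite sumR_scal. apply sumR_ext. intros j _.
  match goal with |- (if ?c then _ else _) = _ => destruct c end; ring.
Qed.

Lemma dop_zero i m p : dop i (fun _ _ => 0) m p = 0.
Proof.
  unfold dop. apply sumR_zero. intros j _.
  match goal with |- (if ?c then _ else _) = _ => destruct c end; ring.
Qed.

Lemma dop_sum i K (F : nat -> elA) m p :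
  dop i (fun m0 p0 => sumR K (fun j => F j m0 p0)) m p = sumR K (fun j => dop i (F j) m p).
Proof.
  induction K; simpl. apply dop_zero.
  rewrite (dop_plus i (fun m0 p0 => sumR K (fun j => F j m0 p0)) (F K)). rewrite IHK; auto.
Qed.

Lemma homotopy_zero i m p : homotopy i (fun _ _ => 0) m p = 0.
Proof.
  unfold homotopy, h_trunc. rewrite sumR_zero; [ring|]. intros j _.
  unfold u_dtheta. match goal with |- (if ?c then _ else _) = _ => destruct c end; ring.
Qed.

Definition active (m : Mon) : list nat := filter (fun j => Nat.ltb 0 (weight j m)) (seq 0 n).

Definition restrict (P : list nat -> bool) (x : elA) : elA := fun m p => if P (active m) then x m p else 0.

Lemma active_eq m m' : (forall j, weight j m' = weight j m) -> active m' = active m.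
Proof. intros H. unfold active. apply filter_ext. intros j. rewrite H; auto. Qed.

Lemma theta_du_restrict i s P x m p : validM n m ->
  theta_du (theta_var i s) (u_var i s) (restrict P x) m p = if P (active m) then theta_du (theta_var i s) (u_var i s) x m p else 0.
Proof.
  intros Hv. unfold theta_du at 1. destruct (memb (theta_var i s) (snd m)) eqn:E.
  - unfold restrict. rewrite (active_eq m) by (intros; apply weight_theta_du_valid; auto).
    destruct (P (active m)); [unfold theta_du; rewrite E|]; ring.
  - destruct (P (active m)); auto. unfold theta_du; rewrite E; auto.
Qed.

Lemma dop_restrict i P x m p : validM n m -> dop i (restrict P x) m p = restrict P (dop i x) m p.
Proof.
  intros Hv. unfold restrict at 2. rewrite !dop_d_level by auto. unfold d_trunc.
  rewrite (sumR_ext _ _ _ (fun s _ => theta_du_restrict i s P x m p Hv)).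
  destruct (P (active m)); auto. apply sumR_zero; auto.
Qed.

Lemma In_active j m : In j (active m) <-> (j < n)%nat /\ weight j m <> 0%nat.
Proof.
  unfold active. rewrite filter_In, in_seq, Nat.ltb_lt. lia.
Qed.

Lemma active_nodup m : NoDup (active m).
Proof. unfold active. apply NoDup_filter, seq_NoDup. Qed.

Lemma active_nil m : active m = [] <-> forall j, (j < n)%nat -> weight j m = 0%nat.
Proof.
  split.
  - intros H j Hj. destruct (Nat.eq_dec (weight j m) 0); auto. exfalso.
    assert (In j (active m)) by (apply In_active; auto). rewrite H in H0; auto.
  - intros H. destruct (active m) as [|a l] eqn:E; auto. exfalso.
    assert (Ha : In a (active m)) by (rewrite E; simpl; auto). apply In_active in Ha. destruct Ha as [H1 H2].
    apply H2, H; auto.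
Qed.

Lemma weight_zero_iff j m : weight j m = 0%nat <->
  (forall a, In a (fst m) -> fst a <> j) /\ (forall a, In a (snd m) -> fst a = j -> (snd a <= 1)%nat).
Proof.
  unfold weight. split.
  - intros H. assert (H1 : countp (fun v => Nat.eqb (fst v) j) (fst m) = 0%nat) by lia.
    assert (H2 : countp (fun v => Nat.eqb (fst v) j && Nat.leb 2 (snd v)) (snd m) = 0%nat) by lia.
    apply countp_zero in H1; apply countp_zero in H2. rewrite Forall_forall in *. split.
    + intros a Ha E. specialize (H1 a Ha). rewrite E, Nat.eqb_refl in H1. discriminate.
    + intros a Ha E. specialize (H2 a Ha). rewrite E, Nat.eqb_refl, andb_true_l in H2.
      apply Nat.leb_gt in H2. lia.
  - intros [H1 H2].
    assert (A1 : countp (fun v => Nat.eqb (fst v) j) (fst m) = 0%nat).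
    { apply countp_zero, Forall_forall. intros a Ha. apply Nat.eqb_neq. apply H1; auto. }
    assert (A2 : countp (fun v => Nat.eqb (fst v) j && Nat.leb 2 (snd v)) (snd m) = 0%nat).
    { apply countp_zero, Forall_forall. intros a Ha. destruct (Nat.eqb (fst a) j) eqn:E; auto.
      apply Nat.eqb_eq in E. specialize (H2 a Ha E). rewrite andb_true_l. apply Nat.leb_gt. lia. }
    rewrite A1, A2; auto.
Qed.

Lemma inC_support_active m : validM n m ->
  ((fst m = [] /\ Forall (fun v => (snd v <= 1)%nat) (snd m)) <-> active m = []).
Proof.
  intros [A [B [C D]]]. rewrite active_nil. split.
  - intros [H1 H2] j Hj. apply weight_zero_iff. rewrite H1. split; [intros a []|].
    intros a Ha _. rewrite Forall_forall in H2; auto.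
  - intros H. split.
    + destruct (fst m) as [|a l] eqn:E; auto. exfalso. rewrite Forall_forall in C.
      assert (Ha : In a (fst m)) by (rewrite E; simpl; auto).
      destruct (C a (or_introl eq_refl)) as [Hn _]. specialize (H _ Hn). apply weight_zero_iff in H. destruct H as [H _].
      apply (H a Ha); auto.
    + apply Forall_forall. intros a Ha. rewrite Forall_forall in D. specialize (H _ (D a Ha)).
      apply weight_zero_iff in H. destruct H as [_ H]. apply H; auto.
Qed.

Lemma inCi_support_active i m : validM n m ->
  ((Forall (fun v => fst v = i) (fst m) /\ Forall (fun v => (snd v <= 1)%nat \/ fst v = i) (snd m)) <->
   (forall j, (j < n)%nat -> j <> i -> weight j m = 0%nat)).
Proof.
  intros [A [B [C D]]]. rewrite Forall_forall in *. split.
  - intros [H1 H2] j Hj Hji. apply weight_zero_iff. rewrite Forall_forall in *. split.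
    + intros a Ha E. rewrite (H1 a Ha) in E. auto.
    + intros a Ha E. destruct (H2 a Ha); auto. congruence.
  - intros H. split.
    + intros a Ha. destruct (Nat.eq_dec (fst a) i); auto. exfalso.
      destruct (C a Ha) as [Hn _]. specialize (H _ Hn n0). apply weight_zero_iff in H. destruct H as [H _].
      apply (H a Ha); auto.
    + apply Forall_forall. intros a Ha. destruct (Nat.eq_dec (fst a) i); auto. left.
      specialize (H _ (D a Ha) n0). apply weight_zero_iff in H. destruct H as [_ H]. apply H; auto.
Qed.

(* The classes of a monomial: no active index, exactly one (i), or at least two, keyed by the
   two smallest active indices (i, k). *)
Definition no_active (l : list nat) : bool := match l with [] => true | _ => false end.
Definition one_active (i : nat) (l : list nat) : bool := match l with [j] => Nat.eqb j i | _ => false end.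
Definition two_active (i k : nat) (l : list nat) : bool :=
  match l with j :: j' :: _ => Nat.eqb j i && Nat.eqb j' k | _ => false end.

Lemma restrict_decompose x m p :
  x m p = restrict no_active x m p + sumR n (fun i => restrict (one_active i) x m p)
          + sumR n (fun i => sumR n (fun k => restrict (two_active i k) x m p)).
Proof.
  unfold restrict. destruct (active m) as [|j [|j' l]] eqn:E; simpl.
  - repeat rewrite (sumR_zero n (fun _ => 0)) by auto. ring.
  - rewrite sumR_delta_l. rewrite sumR_zero by (intros; apply sumR_zero; auto).
    assert (Hj : In j (active m)) by (rewrite E; simpl; auto). apply In_active in Hj.
    replace (Nat.ltb j n) with true by (symmetry; apply Nat.ltb_lt; tauto). ring.
  - rewrite (sumR_zero n (fun _ => 0)) by auto. rewrite !Rplus_0_l.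
    assert (Hj : In j (active m)) by (rewrite E; simpl; auto). apply In_active in Hj.
    assert (Hj' : In j' (active m)) by (rewrite E; simpl; auto). apply In_active in Hj'.
    transitivity (sumR n (fun i => if Nat.eqb j i then x m p else 0)).
    + rewrite sumR_delta_l. replace (Nat.ltb j n) with true by (symmetry; apply Nat.ltb_lt; tauto). ring.
    + apply sumR_ext. intros i _. destruct (Nat.eqb j i); simpl.
      * rewrite sumR_delta_l. replace (Nat.ltb j' n) with true by (symmetry; apply Nat.ltb_lt; tauto). auto.
      * symmetry; apply sumR_zero; auto.
Qed.

Lemma one_active_spec i m : one_active i (active m) = true ->
  (i < n)%nat /\ weight i m <> 0%nat /\ forall j, (j < n)%nat -> j <> i -> weight j m = 0%nat.
Proof.
  intros H. destruct (active m) as [|a [|b l]] eqn:E; simpl in H; try discriminate.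
  apply Nat.eqb_eq in H; subst.
  assert (Hj : In i (active m)) by (rewrite E; simpl; auto). apply In_active in Hj.
  split; [tauto|split; [tauto|]]. intros j Hj' Hne. destruct (Nat.eq_dec (weight j m) 0); auto.
  assert (In j (active m)) by (apply In_active; auto). rewrite E in H. simpl in H. destruct H; [congruence|tauto].
Qed.

Lemma two_active_spec i k m : two_active i k (active m) = true ->
  i <> k /\ (i < n)%nat /\ (k < n)%nat /\ weight i m <> 0%nat /\ weight k m <> 0%nat.
Proof.
  intros H. destruct (active m) as [|a [|b l]] eqn:E; simpl in H; try discriminate.
  apply andb_true_iff in H; destruct H as [H1 H2]. apply Nat.eqb_eq in H1; apply Nat.eqb_eq in H2; subst.
  assert (Hnd := active_nodup m). rewrite E in Hnd. inversion Hnd; subst.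
  assert (Hi : In i (active m)) by (rewrite E; simpl; auto). apply In_active in Hi.
  assert (Hk : In k (active m)) by (rewrite E; simpl; auto). apply In_active in Hk.
  split; [intros ->; apply H1; simpl; auto|]. tauto.
Qed.

Lemma no_active_spec m : no_active (active m) = true -> active m = [].
Proof. destruct (active m); simpl; congruence. Qed.
End Active.

Section Algebras.
Variable n : nat.
Variable U : point -> Prop.

Lemma inA_restrict P x : inA n U x -> inA n U (restrict n P x).
Proof.
  intros H m Hm. unfold restrict. destruct (P (active n m)).
  - apply (smooth_ext n U (x m)); auto.
  - apply smooth_const.
Qed.

Lemma inA_homotopy i x : inA n U x -> inA n U (homotopy i x).
Proof.
  intros H m Hm. unfold homotopy, h_trunc.
  apply (smooth_scal n U (/ INR (weight i m)) (fun p => sumR (level m) (fun s => u_dtheta (u_var i s) (theta_var i s) x m p))).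
  apply smooth_sumR. intros s _. unfold u_dtheta.
  destruct (memb (u_var i s) (fst m)) eqn:E1, (memb (theta_var i s) (snd m)) eqn:E2; simpl; try apply smooth_const.
  apply smooth_scal. apply H. apply validM_u_dtheta; auto.
Qed.

Lemma inA_scal (g : point -> R) x : smooth_on n U g -> inA n U x -> inA n U (fun m p => g p * x m p).
Proof. intros Hg H m Hm. apply (smooth_mul n U g (x m)); auto. Qed.

Lemma inA_plus x x' : inA n U x -> inA n U x' -> inA n U (fun m p => x m p + x' m p).
Proof. intros H H' m Hm. apply (smooth_add n U (x m) (x' m)); auto. Qed.

Lemma inA_sum K (F : nat -> elA) : (forall j, (j < K)%nat -> inA n U (F j)) -> inA n U (fun m p => sumR K (fun j => F j m p)).
Proof. intros H m Hm. apply (smooth_sumR n U K (fun j => F j m)). intros j Hj; apply H; auto. Qed.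

Lemma inA_zero : inA n U zeroA.
Proof. intros m Hm. apply smooth_const. Qed.

Lemma inA_if (b : bool) x : inA n U x -> inA n U (fun m p => if b then x m p else 0).
Proof. intros H. destruct b; auto. all: intros m Hm; apply smooth_const. Qed.

Lemma homotopy_eqA_zero i x m p : eqA n U x zeroA -> validM n m -> U p -> homotopy i x m p = 0.
Proof.
  intros H Hm Hp. rewrite (homotopy_congr n i x (fun _ _ => 0)); auto. apply homotopy_zero.
Qed.

Lemma dop_eqA_zero i x m p : eqA n U x zeroA -> validM n m -> U p -> dop i x m p = 0.
Proof.
  intros H Hm Hp. rewrite (dop_congr n i x (fun _ _ => 0)); auto. apply dop_zero.
Qed.

Lemma dop_inC j c m p : (j < n)%nat -> inC n U c -> validM n m -> U p -> dop j c m p = 0.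
Proof.
  intros Hj [_ Hc] Hm Hp. apply (dop_supported_weight_zero n); auto. intros m' Hm' Hnz.
  apply Hc; auto. intros Hcond. apply (inC_support_active n m' Hm') in Hcond.
  rewrite active_nil in Hcond. apply Hnz, Hcond; auto.
Qed.

Lemma dop_dop_inCi i j y m p : (i < n)%nat -> (j < n)%nat -> inCi n U i y -> validM n m -> U p ->
  dop j (dop i y) m p = 0.
Proof.
  intros Hi Hj [_ Hy] Hm Hp. destruct (Nat.eq_dec j i) as [->|Hne].
  - apply dop_dop. apply validM_sorted_mon with n; auto.
  - apply (dop_supported_weight_zero n); auto. intros m' Hm' Hnz. apply (dop_weight_local n); auto.
    intros m'' Hm'' HN. apply Hy; auto. intros Hcond.
    pose proof (proj1 (inCi_support_active n i m'' Hm'') Hcond) as Hc. apply Hnz. rewrite <- (HN j). apply Hc; auto.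
Qed.

Lemma dop_inCi_other_active i j y m p : (j < n)%nat -> j <> i -> inCi n U i y -> validM n m -> U p ->
  weight j m <> 0%nat -> dop i y m p = 0.
Proof.
  intros Hj Hne [_ Hy] Hm Hp Hnz. apply (dop_weight_local n); auto.
  intros m'' Hm'' HN. apply Hy; auto. intros Hcond.
  pose proof (proj1 (inCi_support_active n i m'' Hm'') Hcond) as Hc. apply Hnz. rewrite <- (HN j). apply Hc; auto.
Qed.

End Algebras.

Section DeltaM1.
Variable n : nat.
Variable f : nat -> coef.

Definition prev_coef (x : elAl) (l : nat) : elA := match l with O => zeroA | S l' => x l' end.

Lemma DeltaM1_prev x l m p : DeltaM1 n f x l m p =
  sumR n (fun j => f j p * (p j * dop j (x l) m p - dop j (prev_coef x l) m p)).
Proof.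
  unfold DeltaM1. apply sumR_ext. intros j _. destruct l; simpl; auto.
  unfold zeroA. rewrite dop_zero; auto.
Qed.

Lemma DeltaM1_zero_of_dop x l m p : (forall j, (j < n)%nat -> dop j (x l) m p = 0) ->
  (forall j, (j < n)%nat -> dop j (prev_coef x l) m p = 0) -> DeltaM1 n f x l m p = 0.
Proof.
  intros H1 H2. rewrite DeltaM1_prev. apply sumR_zero. intros j Hj. rewrite H1, H2; auto. ring.
Qed.

Lemma DeltaM1_plus x x' l m p :
  DeltaM1 n f (fun l0 m0 p0 => x l0 m0 p0 + x' l0 m0 p0) l m p = DeltaM1 n f x l m p + DeltaM1 n f x' l m p.
Proof.
  unfold DeltaM1. rewrite <- sumR_plus. apply sumR_ext. intros j _.
  destruct l; cbv beta; rewrite ?dop_plus; ring.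
Qed.

Lemma DeltaM1_zero l m p : DeltaM1 n f (fun _ => zeroA) l m p = 0.
Proof.
  unfold DeltaM1. apply sumR_zero. intros j _. unfold zeroA. destruct l; rewrite ?dop_zero; ring.
Qed.

Lemma DeltaM1_sum K (F : nat -> elAl) l m p :
  DeltaM1 n f (fun l0 m0 p0 => sumR K (fun i => F i l0 m0 p0)) l m p = sumR K (fun i => DeltaM1 n f (F i) l m p).
Proof.
  induction K; simpl.
  - apply DeltaM1_zero.
  - rewrite (DeltaM1_plus (fun l0 m0 p0 => sumR K (fun i => F i l0 m0 p0)) (F K)). rewrite IHK; auto.
Qed.

Lemma DeltaM1_restrict P x l m p : validM n m ->
  DeltaM1 n f (fun l0 => restrict n P (x l0)) l m p = restrict n P (DeltaM1 n f x l) m p.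
Proof.
  intros Hm. unfold restrict at 2. unfold DeltaM1.
  destruct (P (active n m)) eqn:E.
  - apply sumR_ext. intros j _. destruct l; rewrite ?dop_restrict by auto; unfold restrict; rewrite E; auto.
  - apply sumR_zero. intros j _. destruct l; rewrite ?dop_restrict by auto; unfold restrict; rewrite E; ring.
Qed.

Lemma dop_homotopy i j X m p : validM n m -> (weight i m = 0%nat -> X m p = 0) ->
  dop j (homotopy i X) m p + homotopy i (dop j X) m p = if Nat.eqb j i then X m p else 0.
Proof.
  intros Hm HX. destruct (Nat.eqb j i) eqn:E.
  - apply Nat.eqb_eq in E; subst. destruct (Nat.eq_dec (weight i m) 0) as [Z|NZ].
    + rewrite (dop_weight_zero n) by auto. rewrite homotopy_weight_zero by auto. rewrite HX; auto. ring.
    + apply (dop_homotopy_diag n); auto.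
  - apply Nat.eqb_neq in E. apply dop_homotopy_anticomm; auto. apply validM_sorted_mon with n; auto.
Qed.
Lemma DeltaM1_single b i l m p : (i < n)%nat ->
  (forall j k, (j < n)%nat -> j <> i -> dop j (b k) m p = 0) ->
  DeltaM1 n f b l m p = f i p * (p i * dop i (b l) m p - dop i (prev_coef b l) m p).
Proof.
  intros Hi Hb. rewrite DeltaM1_prev, (sumR_single n i); [reflexivity|auto|].
  intros j Hj Hji. rewrite Hb by auto.
  destruct l; simpl; [unfold zeroA; rewrite dop_zero | rewrite Hb by auto]; ring.
Qed.

(* The coefficients D_l of d_i b satisfy D_l = u^i D_{l+1}, so a polynomial b cannot have
   f^i (u^i - lambda) d_i b constant in lambda unless d_i b = 0. *)
Lemma dop_zero_of_DeltaM1_const b i N m p : (i < n)%nat -> f i p <> 0 ->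
  (forall j k, (j < n)%nat -> j <> i -> dop j (b k) m p = 0) ->
  (forall l, DeltaM1 n f b (S l) m p = 0) ->
  (forall k, (N <= k)%nat -> dop i (b k) m p = 0) ->
  forall l, dop i (b l) m p = 0.
Proof.
  intros Hi Hf Hb HD HN. apply (geometric_descent_zero (fun l => dop i (b l) m p) (p i) N); auto.
  intros l. specialize (HD l). rewrite (DeltaM1_single b i) in HD by auto. simpl in HD.
  apply Rmult_integral in HD. destruct HD as [H|H]; [contradiction|lra].
Qed.
End DeltaM1.

(** * Cocycles and the direct sum *)

Section Cocycles.
Variable n : nat.
Variable U : point -> Prop.
Variable f : nat -> coef.

Lemma DeltaM1_inCl_cocycle : forall c, inCl n U c -> eqAl n U (DeltaM1 n f c) zeroAl.
Proof.
  intros c [_ Hc] l m Hm p Hp. unfold zeroAl, zeroA. apply DeltaM1_zero_of_dop; intros j Hj.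
  - apply (dop_inC n U); auto.
  - destruct l; simpl; [apply dop_zero | apply (dop_inC n U); auto].
Qed.

Lemma DeltaM1_dop_inCi_cocycle : forall i y, (i < n)%nat -> inCi n U i y -> eqAl n U (DeltaM1 n f (constL (dop i y))) zeroAl.
Proof.
  intros i y Hi Hy l m Hm p Hp. unfold zeroAl, zeroA. apply DeltaM1_zero_of_dop; intros j Hj.
  - destruct l; simpl; [apply (dop_dop_inCi n U); auto | apply dop_zero].
  - destruct l as [|[|l]]; simpl; [apply dop_zero| apply (dop_dop_inCi n U); auto | apply dop_zero].
Qed.

Lemma inC_active_zero c m p : inC n U c -> validM n m -> U p -> active n m <> [] -> c m p = 0.
Proof.
  intros [_ Hc] Hm Hp Ha. apply Hc; auto. intros Hcond. apply Ha. apply (inC_support_active n m Hm); auto.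
Qed.

Lemma combo_coboundary_inCl_zero c y b : inCl n U c ->
  eqAl n U (combo n c y) (DeltaM1 n f b) -> eqAl n U c zeroAl.
Proof.
  intros [_ Hc] Hcomb l m Hm p Hp. unfold zeroAl, zeroA.
  destruct (active n m) eqn:E.
  - assert (Hz : forall j, (j < n)%nat -> weight j m = 0%nat) by (apply (proj1 (active_nil n m)); auto).
    specialize (Hcomb l m Hm p Hp). unfold combo in Hcomb.
    rewrite DeltaM1_zero_of_dop in Hcomb by (intros j Hj; apply (dop_weight_zero n); auto).
    destruct l; simpl in Hcomb.
    + rewrite sumR_zero in Hcomb by (intros j Hj; apply (dop_weight_zero n); auto). lra.
    + unfold zeroA in Hcomb. lra.
  - apply inC_active_zero; auto. rewrite E; discriminate.
Qed.

Lemma combo_coboundary_dop_zero c y b : (forall i, (i < n)%nat -> forall p, U p -> f i p <> 0) ->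
  inCl n U c -> (forall i, (i < n)%nat -> inCi n U i (y i)) -> inAl n U b ->
  eqAl n U (combo n c y) (DeltaM1 n f b) -> forall i, (i < n)%nat -> eqA n U (dop i (y i)) zeroA.
Proof.
  intros Hf Hc Hy [[N HN] _] Hcomb i Hi m Hm p Hp. unfold zeroA.
  assert (Hc0 := combo_coboundary_inCl_zero c y b Hc Hcomb).
  destruct (Nat.eq_dec (weight i m) 0) as [Z|NZ]; [apply (dop_weight_zero n); auto|].
  destruct (classic (exists j, (j < n)%nat /\ j <> i /\ weight j m <> 0%nat)) as [[j [Hj [Hji Hnz]]]|Hno].
  { apply (dop_inCi_other_active n U i j); auto. }
  assert (Hoth : forall j, (j < n)%nat -> j <> i -> weight j m = 0%nat).
  { intros j Hj Hji. destruct (Nat.eq_dec (weight j m) 0); auto. exfalso; apply Hno; eauto. }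
  assert (Hb : forall j k, (j < n)%nat -> j <> i -> dop j (b k) m p = 0)
    by (intros; apply (dop_weight_zero n); auto).
  assert (HDb : forall l, dop i (b l) m p = 0).
  { apply (dop_zero_of_DeltaM1_const n f b i N); auto.
    - intros l. rewrite <- (Hcomb (S l) m Hm p Hp). unfold combo.
      rewrite (Hc0 (S l) m Hm p Hp). cbv [zeroAl zeroA constL]. ring.
    - intros k Hk. apply (dop_eqA_zero n U); auto. }
  specialize (Hcomb 0%nat m Hm p Hp). unfold combo in Hcomb.
  rewrite (Hc0 0%nat m Hm p Hp), (DeltaM1_single n f b i) in Hcomb by auto. simpl in Hcomb.
  rewrite HDb in Hcomb. unfold zeroA in Hcomb. rewrite dop_zero in Hcomb.
  rewrite (sumR_single n i) in Hcomb by (auto; intros j Hj Hji; apply (dop_weight_zero n); auto).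
  unfold zeroAl, zeroA in Hcomb. lra.
Qed.
End Cocycles.

(** * Every cocycle lies in the direct sum up to a coboundary *)

Section PairHomotopy.
Variable n : nat.
Variable U : point -> Prop.
Variable f : nat -> coef.
Hypothesis HU : forall x, U x -> inRn n x.
Hypothesis Hdist : forall p, U p -> forall i j, (i < n)%nat -> (j < n)%nat -> i <> j -> p i <> p j.
Hypothesis Hfs : forall i, (i < n)%nat -> smooth_on n U (f i).
Hypothesis Hfnz : forall i, (i < n)%nat -> forall p, U p -> f i p <> 0.

Definition alpha (i k : nat) : point -> R := fun p => / (f i p * (p i - p k)).
Definition beta (i k : nat) : point -> R := fun p => - / (f k p * (p i - p k)).

(* Where both i and k are active, the anticommutator of alpha h_i + beta h_k with
   sum_j f^j (u^j - lambda) d_j is (u^i - lambda)/(u^i - u^k) - (u^k - lambda)/(u^i - u^k) = 1. *)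
Definition two_homotopy (i k : nat) (x : elA) : elA :=
  fun m p => alpha i k p * homotopy i x m p + beta i k p * homotopy k x m p.

Lemma homotopy_lincomb i K (G H : nat -> point -> R) (x x' : nat -> elA) m p :
  homotopy i (fun m0 p0 => sumR K (fun j => G j p0 * (H j p0 * x j m0 p0 - x' j m0 p0))) m p =
  sumR K (fun j => G j p * (H j p * homotopy i (x j) m p - homotopy i (x' j) m p)).
Proof.
  unfold homotopy, h_trunc.
  transitivity (/ INR (weight i m) * sumR (level m) (fun s => sumR K (fun j =>
     G j p * (H j p * u_dtheta (u_var i s) (theta_var i s) (x j) m p - u_dtheta (u_var i s) (theta_var i s) (x' j) m p)))).
  - f_equal. apply sumR_ext. intros s _. unfold u_dtheta.
    destruct (memb (u_var i s) (fst m) && negb (memb (theta_var i s) (snd m))).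
    + rewrite sumR_scal. apply sumR_ext. intros; ring.
    + symmetry; apply sumR_zero; intros; ring.
  - rewrite sumR_swap, sumR_scal. apply sumR_ext. intros j _.
    rewrite (sumR_ext _ _ (fun s => (G j p * H j p) * u_dtheta (u_var i s) (theta_var i s) (x j) m p - G j p * u_dtheta (u_var i s) (theta_var i s) (x' j) m p))
      by (intros; ring).
    rewrite sumR_lincomb2. ring.
Qed.

Lemma dop_two_homotopy i k j X m p : validM n m ->
  (weight i m = 0%nat \/ weight k m = 0%nat -> X m p = 0) ->
  dop j (two_homotopy i k X) m p =
    alpha i k p * ((if Nat.eqb j i then X m p else 0) - homotopy i (dop j X) m p)
  + beta i k p * ((if Nat.eqb j k then X m p else 0) - homotopy k (dop j X) m p).
Proof.
  intros Hm HX. unfold two_homotopy.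
  rewrite (dop_plus j (fun m0 p0 => alpha i k p0 * homotopy i X m0 p0) (fun m0 p0 => beta i k p0 * homotopy k X m0 p0)).
  rewrite (dop_scal j (alpha i k) (homotopy i X)), (dop_scal j (beta i k) (homotopy k X)).
  rewrite <- (dop_homotopy n i j X m p), <- (dop_homotopy n k j X m p); auto; ring.
Qed.

Lemma homotopy_DeltaM1_cocycle a X l m p : validM n m ->
  (forall l' m', validM n m' -> DeltaM1 n f X l' m' p = 0) ->
  sumR n (fun j => f j p * (p j * homotopy a (dop j (X l)) m p - homotopy a (dop j (prev_coef X l)) m p)) = 0.
Proof.
  intros Hm HD. rewrite <- (homotopy_lincomb a n (fun j p0 => f j p0) (fun j p0 => p0 j)
    (fun j => dop j (X l)) (fun j => dop j (prev_coef X l))).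
  rewrite (homotopy_congr n a _ (fun _ _ => 0)); [apply homotopy_zero|auto|].
  intros m' Hm'. rewrite <- (HD l m' Hm'). symmetry. apply DeltaM1_prev.
Qed.

Lemma DeltaM1_two_homotopy i k X l m p : (i < n)%nat -> (k < n)%nat -> i <> k -> validM n m -> U p ->
  (forall l' m', validM n m' -> DeltaM1 n f X l' m' p = 0) ->
  (forall l' m', weight i m' = 0%nat \/ weight k m' = 0%nat -> X l' m' p = 0) ->
  DeltaM1 n f (fun l' => two_homotopy i k (X l')) l m p = X l m p.
Proof.
  intros Hi Hk Hne Hm Hp HD HX. rewrite DeltaM1_prev.
  set (Yp := prev_coef X l).
  assert (HYp : weight i m = 0%nat \/ weight k m = 0%nat -> Yp m p = 0).
  { intros H. unfold Yp. destruct l; simpl; [reflexivity|auto]. }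
  assert (Hprev : forall j, dop j (prev_coef (fun l' => two_homotopy i k (X l')) l) m p = dop j (two_homotopy i k Yp) m p).
  { intros j. apply (dop_congr n); auto. intros m' Hm'. unfold Yp. destruct l; simpl; auto.
    unfold two_homotopy, zeroA. rewrite !homotopy_zero. ring. }
  rewrite (sumR_ext _ _ (fun j =>
    f j p * (p j * ((alpha i k p * (if Nat.eqb j i then 1 else 0) + beta i k p * (if Nat.eqb j k then 1 else 0)) * X l m p)
              - (alpha i k p * (if Nat.eqb j i then 1 else 0) + beta i k p * (if Nat.eqb j k then 1 else 0)) * Yp m p)
    - alpha i k p * (f j p * (p j * homotopy i (dop j (X l)) m p - homotopy i (dop j Yp) m p))
    - beta i k p * (f j p * (p j * homotopy k (dop j (X l)) m p - homotopy k (dop j Yp) m p)))).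
  2: { intros j Hj. rewrite Hprev, (dop_two_homotopy i k j (X l)), (dop_two_homotopy i k j Yp); auto.
       destruct (Nat.eqb j i), (Nat.eqb j k); ring. }
  rewrite sumR_lincomb3, !(homotopy_DeltaM1_cocycle _ X l) by auto. rewrite !Rmult_0_r, !Rminus_0_r.
  transitivity (sumR n (fun j => (if Nat.eqb i j then f i p * (p i * alpha i k p * X l m p - alpha i k p * Yp m p) else 0)
                               + (if Nat.eqb k j then f k p * (p k * beta i k p * X l m p - beta i k p * Yp m p) else 0))).
  { apply sumR_ext. intros j _.
       destruct (Nat.eq_dec j i) as [->|H1]; [destruct (Nat.eq_dec i k) as [->|H2]|destruct (Nat.eq_dec j k) as [->|H2]];
         try congruence; rewrite ?Nat.eqb_refl;
         repeat match goal with |- context [Nat.eqb ?a ?b] => (rewrite (proj2 (Nat.eqb_neq a b)) by congruence) end;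
         ring. }
  rewrite sumR_plus, !sumR_delta_l, (proj2 (Nat.ltb_lt _ _) Hi), (proj2 (Nat.ltb_lt _ _) Hk).
  assert (f1 := Hfnz i Hi p Hp). assert (f2 := Hfnz k Hk p Hp).
  assert (d : p i - p k <> 0) by (intros E; apply (Hdist p Hp i k Hi Hk Hne); lra).
  unfold alpha, beta. field. auto.
Qed.

Lemma alpha_smooth i k : (i < n)%nat -> (k < n)%nat -> i <> k -> smooth_on n U (alpha i k).
Proof.
  intros Hi Hk Hne. unfold alpha.
  apply (smooth_inv n U (fun p => f i p * (p i - p k))).
  - apply (smooth_mul n U (f i) (fun p => p i - p k)); auto.
    apply (smooth_ext n U (fun p => p i + (-1) * p k)); [intros; ring|].
    apply (smooth_add n U (fun p => p i) (fun p => (-1) * p k)); [apply smooth_coord; auto|].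
    apply smooth_scal. apply smooth_coord; auto.
  - intros x Hx. apply Rmult_integral_contrapositive. split; [apply Hfnz; auto|].
    intros E. apply (Hdist x Hx i k); auto. lra.
Qed.
Lemma beta_smooth i k : (i < n)%nat -> (k < n)%nat -> i <> k -> smooth_on n U (beta i k).
Proof.
  intros Hi Hk Hne. unfold beta.
  apply (smooth_ext n U (fun p => (-1) * / (f k p * (p i - p k)))); [intros; ring|].
  apply smooth_scal. apply (smooth_inv n U (fun p => f k p * (p i - p k))).
  - apply (smooth_mul n U (f k) (fun p => p i - p k)); auto.
    apply (smooth_ext n U (fun p => p i + (-1) * p k)); [intros; ring|].
    apply (smooth_add n U (fun p => p i) (fun p => (-1) * p k)); [apply smooth_coord; auto|].
    apply smooth_scal. apply smooth_coord; auto.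
  - intros x Hx. apply Rmult_integral_contrapositive. split; [apply Hfnz; auto|].
    intros E. apply (Hdist x Hx i k); auto. lra.
Qed.
End PairHomotopy.

Section Surj.
Variable n : nat.
Variable U : point -> Prop.
Variable f : nat -> coef.
Variable z : elAl.
Variable N : nat.
Hypothesis HU : forall x, U x -> inRn n x.
Hypothesis Hdist : forall p, U p -> forall i j, (i < n)%nat -> (j < n)%nat -> i <> j -> p i <> p j.
Hypothesis Hfs : forall i, (i < n)%nat -> smooth_on n U (f i).
Hypothesis Hfnz : forall i, (i < n)%nat -> forall p, U p -> f i p <> 0.
Hypothesis Hz : forall k, inA n U (z k).
Hypothesis HN : forall k, (N <= k)%nat -> eqA n U (z k) zeroA.
Hypothesis HD : eqAl n U (DeltaM1 n f z) zeroAl.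

Definition c_part (l : nat) : elA := restrict n no_active (z l).
Definition one_part (i l : nat) : elA := restrict n (one_active i) (z l).
Definition one_prim (i l : nat) : elA := homotopy i (one_part i l).
Definition y_part (i : nat) : elA := fun m p => sumR N (fun k => p i ^ k * one_prim i k m p).
Definition one_quotient (i a : nat) : elA := fun m p => sumR N (fun k => if Nat.ltb a k then p i ^ (k - 1 - a) * one_prim i k m p else 0).
Definition b_one (i l : nat) : elA := fun m p => (- / f i p) * one_quotient i l m p.
Definition two_part (i k l : nat) : elA := restrict n (two_active i k) (z l).
Definition b_two (i k l : nat) : elA := if Nat.eqb i k then zeroA else two_homotopy f i k (two_part i k l).
Definition b_part : elAl := fun l m p => sumR n (fun i => b_one i l m p) + sumR n (fun i => sumR n (fun k => b_two i k l m p)).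

Lemma restrict_high_degree P l : (N <= l)%nat -> eqA n U (restrict n P (z l)) zeroA.
Proof. intros Hl m Hm p Hp. unfold restrict. destruct (P (active n m)); auto. apply HN; auto. Qed.

Lemma one_prim_high_degree i l m p : (N <= l)%nat -> validM n m -> U p -> one_prim i l m p = 0.
Proof. intros Hl Hm Hp. unfold one_prim. apply (homotopy_eqA_zero n U); auto. apply restrict_high_degree; auto. Qed.

Lemma one_part_other_active i j l m p : validM n m -> (j < n)%nat -> j <> i -> weight j m <> 0%nat -> one_part i l m p = 0.
Proof.
  intros Hm Hj Hji Hnz. unfold one_part, restrict. destruct (one_active i (active n m)) eqn:E; auto.
  apply one_active_spec in E. destruct E as [_ [_ E]]. exfalso; apply Hnz, E; auto.
Qed.

Lemma one_prim_other_active i j l m p : validM n m -> (j < n)%nat -> j <> i -> weight j m <> 0%nat -> one_prim i l m p = 0.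
Proof.
  intros Hm Hj Hji Hnz. unfold one_prim. apply (homotopy_weight_local n); auto. intros m'' Hm'' HN'.
  apply (one_part_other_active i j); auto. rewrite HN'; auto.
Qed.

Lemma dop_one_part i l m p : (i < n)%nat -> validM n m -> U p -> dop i (one_part i l) m p = 0.
Proof.
  intros Hi Hm Hp. revert l.
  apply (dop_zero_of_DeltaM1_const n f (fun l => one_part i l) i N); auto.
  - intros j k Hj Hji. apply (dop_supported_weight_zero n); auto. intros m' Hm' Hnz.
    apply (one_part_other_active i j); auto.
  - intros l. unfold one_part. rewrite (DeltaM1_restrict n f (one_active i) z (S l) m p Hm).
    unfold restrict. destruct (one_active i (active n m)); auto. apply HD; auto.
  - intros k Hk. apply (dop_eqA_zero n U); auto. apply restrict_high_degree; auto.
Qed.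

Lemma one_part_dop_one_prim i l m p : (i < n)%nat -> validM n m -> U p -> one_part i l m p = dop i (one_prim i l) m p.
Proof.
  intros Hi Hm Hp. destruct (Nat.eq_dec (weight i m) 0) as [Z|NZ].
  - rewrite (dop_weight_zero n) by auto. unfold one_part, restrict. destruct (one_active i (active n m)) eqn:E; auto.
    apply one_active_spec in E. destruct E as [_ [E _]]. contradiction.
  - rewrite <- (dop_homotopy_diag n i (one_part i l) m p Hm NZ). unfold one_prim.
    rewrite (homotopy_congr n i (dop i (one_part i l)) (fun _ _ => 0)); auto.
    + rewrite homotopy_zero; ring.
    + intros m' Hm'. apply dop_one_part; auto.
Qed.

Lemma dop_one_prim_high_degree i k m p : (N <= k)%nat -> validM n m -> U p -> dop i (one_prim i k) m p = 0.
Proof.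
  intros Hk Hm Hp. rewrite (dop_congr n i (one_prim i k) (fun _ _ => 0)); auto. apply dop_zero.
  intros m' Hm'. apply one_prim_high_degree; auto.
Qed.

Lemma dop_one_tail i a m p : dop i (one_quotient i a) m p =
  sumR N (fun k => if Nat.ltb a k then p i ^ (k - 1 - a) * dop i (one_prim i k) m p else 0).
Proof.
  unfold one_quotient. rewrite (dop_sum i N (fun k m0 p0 => if Nat.ltb a k then p0 i ^ (k - 1 - a) * one_prim i k m0 p0 else 0)).
  apply sumR_ext. intros k _. destruct (Nat.ltb a k).
  - apply (dop_scal i (fun p0 => p0 i ^ (k - 1 - a)) (one_prim i k)).
  - apply dop_zero.
Qed.

Lemma dop_y_part i m p : dop i (y_part i) m p = sumR N (fun k => p i ^ k * dop i (one_prim i k) m p).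
Proof.
  unfold y_part. rewrite (dop_sum i N (fun k m0 p0 => p0 i ^ k * one_prim i k m0 p0)).
  apply sumR_ext. intros k _. apply (dop_scal i (fun p0 => p0 i ^ k) (one_prim i k)).
Qed.

Lemma b_one_other_active i j l m p : validM n m -> (j < n)%nat -> j <> i -> weight j m <> 0%nat -> b_one i l m p = 0.
Proof.
  intros Hm Hj Hji Hnz. unfold b_one, one_quotient. rewrite sumR_zero; [ring|]. intros k _.
  destruct (Nat.ltb l k); auto. rewrite (one_prim_other_active i j); auto. ring.
Qed.

Lemma one_part_cohomologous i l m p : (i < n)%nat -> validM n m -> U p ->
  one_part i l m p = (match l with O => dop i (y_part i) m p | S _ => 0 end) + DeltaM1 n f (b_one i) l m p.
Proof.
  intros Hi Hm Hp.
  assert (Hb : forall j k, (j < n)%nat -> j <> i -> dop j (b_one i k) m p = 0).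
  { intros j k Hj Hji. apply (dop_supported_weight_zero n); auto. intros m' Hm' Hnz.
    apply (b_one_other_active i j); auto. }
  rewrite (DeltaM1_single n f (b_one i) i l m p Hi Hb), one_part_dop_one_prim by auto.
  set (W := fun k => dop i (one_prim i k) m p).
  assert (HW : forall k, (N <= k)%nat -> W k = 0) by (intros; apply dop_one_prim_high_degree; auto).
  pose proof (polynomial_division_identity W N (p i) HW l) as PI.
  assert (Eb : forall a, dop i (b_one i a) m p = - / f i p * sumR N (fun k => if Nat.ltb a k then p i ^ (k - 1 - a) * W k else 0)).
  { intros a. unfold b_one. rewrite (dop_scal i (fun p0 => - / f i p0) (one_quotient i a)). rewrite dop_one_tail. auto. }
  assert (fnz := Hfnz i Hi p Hp).
  destruct l as [|l'].
  - simpl. unfold zeroA. rewrite dop_zero. rewrite dop_y_part. fold W. rewrite Eb.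
    change (dop i (one_prim i 0) m p) with (W 0%nat).
    change (sumR N (fun k => p i ^ k * dop i (one_prim i k) m p)) with (sumR N (fun k => p i ^ k * W k)).
    rewrite <- PI. field. auto.
  - simpl. rewrite !Eb. change (dop i (one_prim i (S l')) m p) with (W (S l')). rewrite <- PI. field. auto.
Qed.

Lemma two_part_inactive i k l m p : (weight i m = 0%nat \/ weight k m = 0%nat) -> two_part i k l m p = 0.
Proof.
  intros H. unfold two_part, restrict. destruct (two_active i k (active n m)) eqn:E; auto.
  apply two_active_spec in E. destruct E as [_ [_ [_ [E1 E2]]]]. destruct H; contradiction.
Qed.

Lemma two_part_coboundary i k l m p : (i < n)%nat -> (k < n)%nat -> validM n m -> U p ->
  two_part i k l m p = DeltaM1 n f (b_two i k) l m p.
Proof.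
  intros Hi Hk Hm Hp. unfold b_two. destruct (Nat.eqb_spec i k) as [<-|Hne].
  - rewrite DeltaM1_zero. unfold two_part, restrict.
    destruct (two_active i i (active n m)) eqn:E; auto. apply two_active_spec in E. tauto.
  - symmetry. apply (DeltaM1_two_homotopy n U f); auto.
    + intros l' m' Hm'. unfold two_part. rewrite (DeltaM1_restrict n f (two_active i k) z l' m' p Hm').
      unfold restrict. destruct (two_active i k (active n m')); auto. apply HD; auto.
    + intros l' m' H. apply two_part_inactive; auto.
Qed.

Lemma inA_one_prim i l : inA n U (one_prim i l).
Proof. unfold one_prim. apply inA_homotopy. apply inA_restrict. apply Hz. Qed.

Lemma inCl_c_part : inCl n U c_part.
Proof.
  split; [split|].
  - exists N. intros k Hk. apply restrict_high_degree; auto.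
  - intros k. apply inA_restrict, Hz.
  - intros k. split; [apply inA_restrict, Hz|].
    intros m Hm Hcond p Hp. unfold c_part, restrict. destruct (no_active (active n m)) eqn:E; auto.
    exfalso. apply Hcond. apply (inC_support_active n m Hm). apply no_active_spec; auto.
Qed.

Lemma inCi_y_part i : (i < n)%nat -> inCi n U i (y_part i).
Proof.
  intros Hi. split.
  - unfold y_part. apply (inA_sum n U N (fun k m p => p i ^ k * one_prim i k m p)). intros k _.
    apply (inA_scal n U (fun p => p i ^ k)); [apply smooth_pow, smooth_coord; auto|apply inA_one_prim].
  - intros m Hm Hcond p Hp.
    assert (Hex : exists j, (j < n)%nat /\ j <> i /\ weight j m <> 0%nat).
    { apply NNPP. intros Hno. apply Hcond. apply (inCi_support_active n i m Hm). intros j Hj Hji.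
      destruct (Nat.eq_dec (weight j m) 0); auto. exfalso; apply Hno; eauto. }
    destruct Hex as [j [Hj [Hji Hnz]]].
    unfold y_part. apply sumR_zero. intros k _. rewrite (one_prim_other_active i j); auto. ring.
Qed.

Lemma inAl_b_part : inAl n U b_part.
Proof.
  split.
  - exists N. intros l Hl m Hm p Hp. unfold b_part, zeroA.
    rewrite sumR_zero, sumR_zero; [ring| |].
    + intros i Hi. apply sumR_zero. intros k Hk. unfold b_two. destruct (Nat.eqb i k); [unfold zeroA; auto|].
      unfold two_homotopy. rewrite !(homotopy_eqA_zero n U); auto; try ring; apply restrict_high_degree; auto.
    + intros i Hi. unfold b_one, one_quotient. rewrite sumR_zero; [ring|]. intros k Hk.
      destruct (Nat.ltb l k) eqn:E; auto. apply Nat.ltb_lt in E. lia.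
  - intros l. unfold b_part.
    apply (inA_plus n U (fun m p => sumR n (fun i => b_one i l m p))).
    + apply (inA_sum n U n (fun i m p => b_one i l m p)). intros i Hi. unfold b_one.
      apply (inA_scal n U (fun p => - / f i p)).
      * apply (smooth_ext n U (fun p => (-1) * / f i p)); [intros; ring|]. apply smooth_scal.
        apply smooth_inv; auto.
      * unfold one_quotient. apply (inA_sum n U N (fun k m p => if Nat.ltb l k then p i ^ (k - 1 - l) * one_prim i k m p else 0)).
        intros k _. apply (inA_if n U (Nat.ltb l k) (fun m p => p i ^ (k - 1 - l) * one_prim i k m p)).
        apply (inA_scal n U (fun p => p i ^ (k - 1 - l))); [apply smooth_pow, smooth_coord; auto|apply inA_one_prim].
    + apply (inA_sum n U n (fun i m p => sumR n (fun k => b_two i k l m p))). intros i Hi.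
      apply (inA_sum n U n (fun k m p => b_two i k l m p)). intros k Hk.
      unfold b_two. destruct (Nat.eqb i k) eqn:E; [apply inA_zero|]. apply Nat.eqb_neq in E.
      unfold two_homotopy. apply (inA_plus n U (fun m p => alpha f i k p * homotopy i (two_part i k l) m p)).
      * apply (inA_scal n U (alpha f i k)); [apply (alpha_smooth n U f); auto|]. apply inA_homotopy, inA_restrict, Hz.
      * apply (inA_scal n U (beta f i k)); [apply (beta_smooth n U f); auto|]. apply inA_homotopy, inA_restrict, Hz.
Qed.

Lemma cocycle_decomposition : eqAl n U z (addAl (combo n c_part y_part) (DeltaM1 n f b_part)).
Proof.
  intros l m Hm p Hp. unfold addAl, combo, b_part.
  rewrite (DeltaM1_plus n f (fun l0 m0 p0 => sumR n (fun i => b_one i l0 m0 p0))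
                         (fun l0 m0 p0 => sumR n (fun i => sumR n (fun k => b_two i k l0 m0 p0)))).
  rewrite (DeltaM1_sum n f n b_one).
  rewrite (DeltaM1_sum n f n (fun i l0 m0 p0 => sumR n (fun k => b_two i k l0 m0 p0))).
  rewrite (sumR_ext n (fun i => DeltaM1 n f (fun l0 m0 p0 => sumR n (fun k => b_two i k l0 m0 p0)) l m p)
                      (fun i => sumR n (fun k => DeltaM1 n f (b_two i k) l m p)))
    by (intros i _; apply (DeltaM1_sum n f n (fun k l0 m0 p0 => b_two i k l0 m0 p0))).
  rewrite (restrict_decompose n (z l) m p).
  rewrite (sumR_ext n (fun i => restrict n (one_active i) (z l) m p)
                      (fun i => (match l with O => dop i (y_part i) m p | S _ => 0 end) + DeltaM1 n f (b_one i) l m p))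
    by (intros i Hi; apply one_part_cohomologous; auto).
  rewrite (sumR_ext n (fun i => sumR n (fun k => restrict n (two_active i k) (z l) m p))
                      (fun i => sumR n (fun k => DeltaM1 n f (b_two i k) l m p))).
  2: { intros i Hi. apply sumR_ext. intros k Hk. apply two_part_coboundary; auto. }
  rewrite sumR_plus. fold (c_part l).
  destruct l; simpl.
  - ring.
  - unfold zeroA. rewrite (sumR_zero n (fun _ => 0)) by auto. ring.
Qed.

End Surj.

Theorem proposition3p1 (n : nat) (U : point -> Prop) (f : nat -> coef) :
  (1 <= n)%nat ->
  is_domain n U ->
  (forall p, U p -> forall i j, (i < n)%nat -> (j < n)%nat -> i <> j -> p i <> p j) ->
  (forall i, (i < n)%nat -> smooth_on n U (f i)) ->
  (forall i, (i < n)%nat -> forall p, U p -> f i p <> 0) ->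
  (forall c, inCl n U c -> eqAl n U (DeltaM1 n f c) zeroAl) /\
  (forall i y, (i < n)%nat -> inCi n U i y ->
     eqAl n U (DeltaM1 n f (constL (dop i y))) zeroAl) /\
  (* surjectivity onto cohomology *)
  (forall z, inAl n U z -> eqAl n U (DeltaM1 n f z) zeroAl ->
     exists (c : elAl) (y : nat -> elA) (b : elAl),
       inCl n U c /\ (forall i, (i < n)%nat -> inCi n U i (y i)) /\ inAl n U b /\
       eqAl n U z (addAl (combo n c y) (DeltaM1 n f b))) /\
  (* injectivity: the direct sum meets the coboundaries only in 0 *)
  (forall (c : elAl) (y : nat -> elA) (b : elAl),
     inCl n U c -> (forall i, (i < n)%nat -> inCi n U i (y i)) -> inAl n U b ->
     eqAl n U (combo n c y) (DeltaM1 n f b) ->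
     eqAl n U c zeroAl /\ (forall i, (i < n)%nat -> eqA n U (dop i (y i)) zeroA)).
Proof.
  intros _ [HU _] Hdist Hfs Hfnz.
  split; [apply DeltaM1_inCl_cocycle|]. split; [apply DeltaM1_dop_inCi_cocycle|]. split.
  - intros z [[N HN] Hz] HD. exists (c_part n z), (y_part n z N), (b_part n f z N).
    split; [|split; [|split]].
    + apply (inCl_c_part n U z N); auto.
    + intros i Hi. apply (inCi_y_part n U z N); auto.
    + apply (inAl_b_part n U f z N); auto.
    + apply (cocycle_decomposition n U f z N); auto.
  - intros c y b Hc Hy Hb Hcomb. split.
    + apply (combo_coboundary_inCl_zero n U f c y b); auto.
    + apply (combo_coboundary_dop_zero n U f c y b); auto.
Qed.
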